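(* Let $F$ be a smooth real-valued function defined on an open neighbourhood of $\dot P_m$ in the real vector space of $m\times m$ Hermitian matrices, and let $\mathcal M(F)$ be the $m\times m$ matrix of its complex partial derivatives defined below. Then the gradient vector of $F|_{\dot P_m}$ at $\rho\in\dot P_m$ with respect to the quantum SLD Fisher metric is $$(\mathrm{grad}\,F)(\rho)=\tfrac12\big(\rho\,\mathcal M(F)+\mathcal M(F)\,\rho\big)-\operatorname{tr}\big(\rho\,\mathcal M(F)\big)\,\rho .$$ Consequently the gradient system $\frac{d\rho}{dt}=-(\mathrm{grad}\,F)(\rho)$ on $(\dot P_m,\langle\!\langle\cdot,\cdot\rangle\!\rangle^{QF})$ is governed by $$\frac{d\rho}{dt}=-\tfrac12\big(\rho\,\mathcal M(F)+\mathcal M(F)\,\rho\big)+\operatorname{tr}\big(\rho\,\mathcal M(F)\big)\,\rho .$$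
   Context: $\dot P_m$ denotes the set of $m\times m$ complex Hermitian positive definite matrices $\rho$ with $\operatorname{tr}\rho=1$ (regular density matrices). Its tangent space at $\rho$ is $T_\rho\dot P_m=\{\Xi\in M(m,m):\Xi^\dagger=\Xi,\ \operatorname{tr}\Xi=0\}$. For $\Xi\in T_\rho\dot P_m$ the symmetric logarithmic derivative $\mathcal L_\rho(\Xi)$ is the matrix with $\tfrac12(\rho\mathcal L_\rho(\Xi)+\mathcal L_\rho(\Xi)\rho)=\Xi$, and the quantum SLD Fisher metric is $\langle\!\langle\Xi,\Xi'\rangle\!\rangle^{QF}_\rho=\tfrac12\operatorname{tr}[\rho(\mathcal L_\rho(\Xi)\mathcal L_\rho(\Xi')+\mathcal L_\rho(\Xi')\mathcal L_\rho(\Xi))]$. The gradient $(\mathrm{grad}\,F)(\rho)\in T_\rho\dot P_m$ is defined by $\langle\!\langle(\mathrm{grad}\,F)(\rho),\Xi'\rangle\!\rangle^{QF}_\rho=\frac{d}{dt}\big|_{t=0}F(\gamma(t))$ for all $\Xi'\in T_\rho\dot P_m$, where $\gamma$ is any curve in $\dot P_m$ with $\gamma(0)=\rho$, $\gamma'(0)=\Xi'$. Write the entries of a Hermitian $\rho$ as $\rho_{jk}=\overline{\rho_{kj}}=x_{jk}+iy_{jk}$ ($j<k$, $x_{jk},y_{jk}$ real) and $\rho_{\ell\ell}=z_\ell$ real, and set $\partial/\partial\rho_{ab}=\tfrac12(\partial/\partial x_{ab}-i\,\partial/\partial y_{ab})$, $\partial/\partial\overline\rho_{ab}=\tfrac12(\partial/\partial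 x_{ab}+i\,\partial/\partial y_{ab})$ for $a<b$. Then $\mathcal M(F)$ is the $m\times m$ matrix with $(\mathcal M(F))_{jk}=\partial F/\partial\overline\rho_{jk}$ for $j<k$, $(\mathcal M(F))_{jk}=\partial F/\partial\rho_{kj}$ for $k<j$, and $(\mathcal M(F))_{jj}=\partial F/\partial z_j$. *)

(* Complex numbers are pairs (re, im) of reals; m x m complex matrices are
   functions nat -> nat -> C whose entries with indices >= m are ignored
   (all notions below only look at indices < m; equality is [meq m]). *)
From Stdlib Require Import Reals Lra List Arith Bool.
Import ListNotations.
Open Scope R_scope.
Local Open Scope bool_scope.

Definition Cx : Type := (R * R)%type.
Definition C0 : Cx := (0, 0).
Definition Cadd (a b : Cx) : Cx := (fst a + fst b, snd a + snd b).
Definition Copp (a : Cx) : Cx := (- fst a, - snd a).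
Definition Cmul (a b : Cx) : Cx :=
  (fst a * fst b - snd a * snd b, fst a * snd b + snd a * fst b).
Definition Cconj (a : Cx) : Cx := (fst a, - snd a).
Definition Csum (m : nat) (f : nat -> Cx) : Cx := fold_right Cadd C0 (map f (seq 0 m)).
Definition sumR (m : nat) (f : nat -> R) : R := fold_right Rplus 0 (map f (seq 0 m)).

Definition CMat : Type := nat -> nat -> Cx.
Definition madd (A B : CMat) : CMat := fun i j => Cadd (A i j) (B i j).
Definition mscale (c : Cx) (A : CMat) : CMat := fun i j => Cmul c (A i j).
Definition mmul (m : nat) (A B : CMat) : CMat :=
  fun i j => Csum m (fun k => Cmul (A i k) (B k j)).
Definition mtr (m : nat) (A : CMat) : Cx := Csum m (fun i => A i i).
Definition meq (m : nat) (A B : CMat) : Prop :=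
  forall i j, (i < m)%nat -> (j < m)%nat -> A i j = B i j.
Definition mdist (m : nat) (A B : CMat) : R :=
  sumR m (fun i => sumR m (fun j =>
    Rabs (fst (A i j) - fst (B i j)) + Rabs (snd (A i j) - snd (B i j)))).

Definition Herm (m : nat) (A : CMat) : Prop :=
  forall i j, (i < m)%nat -> (j < m)%nat -> A j i = Cconj (A i j).
Definition PosDef (m : nat) (A : CMat) : Prop :=
  forall v : nat -> Cx, (exists i, (i < m)%nat /\ v i <> C0) ->
    0 < fst (Csum m (fun i => Csum m (fun j => Cmul (Cconj (v i)) (Cmul (A i j) (v j))))).
Definition Pdot (m : nat) (rho : CMat) : Prop :=
  Herm m rho /\ PosDef m rho /\ mtr m rho = (1, 0).
Definition Tangent (m : nat) (X : CMat) : Prop := Herm m X /\ mtr m X = C0.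

Definition IsSLD (m : nat) (rho X L : CMat) : Prop :=
  meq m (mscale (1/2, 0) (madd (mmul m rho L) (mmul m L rho))) X.
(* (1/2) tr[rho (L L' + L' L)], which is real; we take its real part *)
Definition QFval (m : nat) (rho L L' : CMat) : R :=
  fst (Cmul (1/2, 0) (mtr m (mmul m rho (madd (mmul m L L') (mmul m L' L))))).

Definition CurveThrough (m : nat) (rho X : CMat) (g : R -> CMat) : Prop :=
  (exists eps, 0 < eps /\ forall t, Rabs t < eps -> Pdot m (g t)) /\
  meq m (g 0) rho /\
  (forall i j, (i < m)%nat -> (j < m)%nat ->
     derivable_pt_lim (fun t => fst (g t i j)) 0 (fst (X i j)) /\
     derivable_pt_lim (fun t => snd (g t i j)) 0 (snd (X i j))).

Definition IsGrad (m : nat) (F : CMat -> R) (rho G : CMat) : Prop :=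
  Tangent m G /\
  forall X, Tangent m X ->
  forall L L', IsSLD m rho G L -> IsSLD m rho X L' ->
  forall g, CurveThrough m rho X g ->
    derivable_pt_lim (fun t => F (g t)) 0 (QFval m rho L L').

Definition Ex (a b : nat) : CMat := fun i j =>
  if ((i =? a) && (j =? b)) || ((i =? b) && (j =? a)) then (1, 0) else C0.
Definition Ey (a b : nat) : CMat := fun i j =>
  if (i =? a) && (j =? b) then (0, 1)
  else if (i =? b) && (j =? a) then (0, -1) else C0.
Definition Ez (l : nat) : CMat := fun i j =>
  if (i =? l) && (j =? l) then (1, 0) else C0.
Definition Dir (m : nat) (E : CMat) : Prop :=
  (exists a b, (a < b)%nat /\ (b < m)%nat /\ (E = Ex a b \/ E = Ey a b)) \/
  (exists l, (l < m)%nat /\ E = Ez l).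

Definition PDeriv (f : CMat -> R) (p E : CMat) (v : R) : Prop :=
  derivable_pt_lim (fun t => f (madd p (mscale (t, 0) E))) 0 v.

Definition OpenHerm (m : nat) (U : CMat -> Prop) : Prop :=
  (forall p, U p -> Herm m p) /\
  forall p, U p -> exists eps, 0 < eps /\
    forall q, Herm m q -> mdist m p q < eps -> U q.

Definition ContOn (m : nat) (U : CMat -> Prop) (f : CMat -> R) : Prop :=
  forall p, U p -> forall eps, 0 < eps -> exists delta, 0 < delta /\
    forall q, U q -> mdist m p q < delta -> Rabs (f q - f p) < eps.

Fixpoint CkOn (m : nat) (U : CMat -> Prop) (k : nat) (f : CMat -> R) : Prop :=
  match k with
  | O => ContOn m U f
  | S k' => ContOn m U f /\
      forall E, Dir m E -> exists g : CMat -> R,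
        (forall p, U p -> PDeriv f p E (g p)) /\ CkOn m U k' g
  end.
Definition SmoothOn (m : nat) (U : CMat -> Prop) (f : CMat -> R) : Prop :=
  forall k, CkOn m U k f.

Definition IsMF (m : nat) (F : CMat -> R) (rho M : CMat) : Prop :=
  forall j k, (j < m)%nat -> (k < m)%nat ->
    ((j < k)%nat -> exists dx dy, PDeriv F rho (Ex j k) dx /\ PDeriv F rho (Ey j k) dy /\
                                  M j k = (dx / 2, dy / 2)) /\
    ((k < j)%nat -> exists dx dy, PDeriv F rho (Ex k j) dx /\ PDeriv F rho (Ey k j) dy /\
                                  M j k = (dx / 2, - dy / 2)) /\
    (j = k -> exists dz, PDeriv F rho (Ez j) dz /\ M j j = (dz, 0)).

Definition gradFormula (m : nat) (rho M : CMat) : CMat :=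
  madd (mscale (1/2, 0) (madd (mmul m rho M) (mmul m M rho)))
       (mscale (Copp (mtr m (mmul m rho M))) rho).
Definition odeRHS (m : nat) (rho M : CMat) : CMat :=
  madd (mscale (- (1/2), 0) (madd (mmul m rho M) (mmul m M rho)))
       (mscale (mtr m (mmul m rho M)) rho).

(* For G tangent at rho, write L_G for its symmetric logarithmic derivative
   (SLD), so that (1/2)(rho L_G + L_G rho) = G.  The proof rests on three facts.
   (1) Pairing: the Fisher product of L_G and L_X equals Re tr(G L_X); with
       G = (1/2)(rho M + M rho) - tr(rho M) rho and tr X = 0 this gives
       <<G, X>> = Re tr(M X).
   (2) Chain rule: for F of class C^1 in the real coordinates x_ab, y_ab, z_l
       and a curve g with g(0) = rho, g'(0) = X, the derivative of F o g at 0
       is sum_d (dF/d coordinate d) * (coordinate d of X), which equals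
       Re tr(M(F) X).  The proof telescopes g(t) - rho one coordinate at a time
       and applies the mean value theorem to each step.
   (3) Uniqueness: the SLD map L |-> (1/2)(rho L + L rho) is injective by
       positivity of rho, hence (finite dimension) surjective; and every
       tangent Z is the velocity of an explicit curve in \dot P_m.  Testing
       two gradients against Z = G1 - G2 yields tr(K rho K) = 0 for the SLD K
       of Z, so K = 0 and G1 = G2.
   Part one of the theorem is (1) + (2); part two, the equivalence between the
   gradient flow and the explicit ODE, is part one combined with (3). *)

From Pilot Require Import Defs.
From Stdlib Require Import Reals.
Open Scope R_scope.
From Stdlib Require Import Lra Lia List Arith Classical Setoid Morphisms
  FunctionalExtensionality.
From mathcomp Require all_boot all_algebra Rstruct.
Import ListNotations.

(* Vectors of R^N are encoded as
   functions nat -> R of which only the first N values matter. *)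
Module RealLinearAlgebra.
Import all_boot all_algebra Rstruct GRing.Theory.
Local Open Scope ring_scope.

Section Surjectivity.
Variable N : nat.
Variable f : (nat -> R) -> (nat -> R).
Hypothesis f_add : forall x y k, f (fun i => x i + y i) k = f x k + f y k.
Hypothesis f_scale : forall c x k, f (fun i => c * x i) k = c * f x k.
Hypothesis f_local : forall x y, (forall i, (i < N)%coq_nat -> x i = y i) ->
  forall k, (k < N)%coq_nat -> f x k = f y k.
Hypothesis f_inj : forall x, (forall k, (k < N)%coq_nat -> f x k = 0) ->
  forall i, (i < N)%coq_nat -> x i = 0.

Definition unit_vec (i : nat) : nat -> R := fun l => if Nat.eqb l i then 1 else 0.

Lemma f_sum (r : seq 'I_N) (c : 'I_N -> R) k :
  f (fun l => \sum_(i <- r) c i * unit_vec i l) k = \sum_(i <- r) c i * f (unit_vec i) k.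
Proof.
elim: r => [|a r IH].
  rewrite big_nil.
  have -> : (fun l : nat => \sum_(i <- [::]) c i * unit_vec i l) = (fun l => 0 * 0).
    by apply: functional_extensionality => l; rewrite big_nil mul0r.
  by rewrite f_scale mul0r.
rewrite big_cons -IH -f_scale -f_add; congr f.
by apply: functional_extensionality => l; rewrite big_cons.
Qed.

Definition of_row (v : 'rV[R]_N) : nat -> R := fun l =>
  match ltnP l N with LtnNotGeq h => v 0 (Ordinal h) | _ => 0 end.

Lemma injective_linear_surjective (y : nat -> R) :
  exists x, forall k, (k < N)%coq_nat -> f x k = y k.
Proof.
pose A : 'M[R]_N := \matrix_(i, j) f (unit_vec i) j.
have mulA : forall v (j : 'I_N), (v *m A) 0 j = f (of_row v) j.
  move=> v j; rewrite mxE; under eq_bigr => i _ do rewrite mxE.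
  rewrite -f_sum; apply: f_local; last exact/ltP.
  move=> l /ltP hl.
  rewrite (bigD1 (Ordinal hl)) //= big1 ?addr0.
    rewrite /unit_vec /of_row Nat.eqb_refl; case: ltnP => [h|h]; last by rewrite leqNgt hl in h.
    by rewrite mulr1; congr (v 0 _); apply: val_inj.
  move=> i hi; rewrite /unit_vec; case: (Nat.eqb_spec l i) => [e|_]; last by rewrite mulr0.
  by case/eqP: hi; apply: val_inj; rewrite /= -e.
have A_inj : forall v : 'rV[R]_N, v *m A = 0 -> v = 0.
  move=> v hv; apply/rowP => i; rewrite mxE.
  have := f_inj (of_row v) _ i (elimT ltP (ltn_ord i)).
  rewrite /of_row; case: ltnP => [h|h]; last by rewrite leqNgt ltn_ord in h.
  have -> : Ordinal h = i by apply: val_inj.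
  apply => k /ltP hk.
  by rewrite -[k]/(nat_of_ord (Ordinal hk)) -mulA hv mxE.
have A_unit : A \in unitmx by rewrite -row_free_unit; apply: inj_row_free.
exists (of_row ((\row_j y j) *m invmx A)) => k /ltP hk.
by rewrite -[k]/(nat_of_ord (Ordinal hk)) -mulA mulmxKV // mxE.
Qed.
End Surjectivity.
End RealLinearAlgebra.

Set Bullet Behavior "Strict Subproofs".

Lemma Ceq (a b : Cx) : fst a = fst b -> snd a = snd b -> a = b.
Proof. destruct a, b; simpl; intros; subst; reflexivity. Qed.

Ltac cunfold := unfold Cadd, Cmul, Copp, Cconj, C0, madd, mscale in *; simpl in *.
Ltac cring := apply Ceq; cunfold; ring.

Lemma Cmul_assoc a b c : Cmul (Cmul a b) c = Cmul a (Cmul b c). Proof. cring. Qed.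
Lemma Cmul_comm a b : Cmul a b = Cmul b a. Proof. cring. Qed.
Lemma Cadd_comm a b : Cadd a b = Cadd b a. Proof. cring. Qed.
Lemma Cmul_add_r a b c : Cmul a (Cadd b c) = Cadd (Cmul a b) (Cmul a c). Proof. cring. Qed.
Lemma Cmul_add_l a b c : Cmul (Cadd a b) c = Cadd (Cmul a c) (Cmul b c). Proof. cring. Qed.
Lemma Cconj_mul a b : Cconj (Cmul a b) = Cmul (Cconj a) (Cconj b). Proof. cring. Qed.
Lemma Cconj_conj a : Cconj (Cconj a) = a. Proof. cring. Qed.

Lemma self_conj_real (a : Cx) : Cconj a = a -> snd a = 0.
Proof. destruct a as [x y]; unfold Cconj; simpl; intros E; injection E; intros; lra. Qed.

Lemma fold_Rplus_acc (l : list R) (a : R) :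
  fold_right Rplus a l = fold_right Rplus 0 l + a.
Proof. induction l; simpl; [ring | rewrite IHl; ring]. Qed.

Lemma sumR_S m f : sumR (S m) f = sumR m f + f m.
Proof.
  unfold sumR. rewrite seq_S, map_app, fold_right_app. simpl.
  rewrite fold_Rplus_acc. ring.
Qed.

Lemma sumR_ext m f g : (forall i, (i < m)%nat -> f i = g i) -> sumR m f = sumR m g.
Proof.
  induction m; intros H; auto. rewrite !sumR_S, IHm, H; auto; intros; apply H; lia.
Qed.

Lemma sumR_plus m f g : sumR m (fun i => f i + g i) = sumR m f + sumR m g.
Proof. induction m; [cbn; ring | rewrite !sumR_S, IHm; ring]. Qed.

Lemma sumR_minus m f g : sumR m (fun i => f i - g i) = sumR m f - sumR m g.
Proof. induction m; [cbn; ring | rewrite !sumR_S, IHm; ring]. Qed.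

Lemma sumR_opp m f : sumR m (fun i => - f i) = - sumR m f.
Proof. induction m; [cbn; ring | rewrite !sumR_S, IHm; ring]. Qed.

Lemma sumR_scal m c f : sumR m (fun i => c * f i) = c * sumR m f.
Proof. induction m; [cbn; ring | rewrite !sumR_S, IHm; ring]. Qed.

Lemma sumR_scal_r m c f : sumR m (fun i => f i * c) = sumR m f * c.
Proof. induction m; [cbn; ring | rewrite !sumR_S, IHm; ring]. Qed.

Lemma sumR_const m c : sumR m (fun _ => c) = INR m * c.
Proof. induction m; [cbn; ring | rewrite sumR_S, IHm, S_INR; ring]. Qed.

Lemma sumR_zero m f : (forall i, (i < m)%nat -> f i = 0) -> sumR m f = 0.
Proof.
  intros H. rewrite (sumR_ext m f (fun _ => 0)), sumR_const by auto. ring.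
Qed.

Lemma sumR_swap m n f :
  sumR m (fun i => sumR n (fun j => f i j)) = sumR n (fun j => sumR m (fun i => f i j)).
Proof.
  induction m.
  - symmetry. apply sumR_zero. reflexivity.
  - rewrite sumR_S, IHm, <- sumR_plus. apply sumR_ext. intros. rewrite sumR_S. ring.
Qed.

Lemma sumR_le m f g : (forall i, (i < m)%nat -> f i <= g i) -> sumR m f <= sumR m g.
Proof.
  induction m; intros H; [cbn; lra|]. rewrite !sumR_S.
  assert (sumR m f <= sumR m g) by (apply IHm; intros; apply H; lia).
  assert (f m <= g m) by (apply H; lia). lra.
Qed.

Lemma sumR_nonneg m f : (forall i, (i < m)%nat -> 0 <= f i) -> 0 <= sumR m f.
Proof. intros H. rewrite <- (Rmult_0_r (INR m)), <- sumR_const. apply sumR_le; auto. Qed.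

Lemma sumR_term_le m f i : (forall j, (j < m)%nat -> 0 <= f j) -> (i < m)%nat -> f i <= sumR m f.
Proof.
  intros H Hi. induction m; [lia|]. rewrite sumR_S.
  destruct (Nat.eq_dec i m).
  - subst. pose proof (sumR_nonneg m f ltac:(intros; apply H; lia)). lra.
  - assert (f i <= sumR m f) by (apply IHm; [intros; apply H; lia | lia]).
    pose proof (H m ltac:(lia)). lra.
Qed.

Lemma sumR_nonneg_zero m f : (forall i, (i < m)%nat -> 0 <= f i) -> sumR m f = 0 ->
  forall i, (i < m)%nat -> f i = 0.
Proof.
  intros H Hs i Hi. pose proof (sumR_term_le m f i H Hi). pose proof (H i Hi). lra.
Qed.

Lemma sumR_single m f i : (i < m)%nat ->
  (forall j, (j < m)%nat -> j <> i -> f j = 0) -> sumR m f = f i.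
Proof.
  intros Hi H. induction m; [lia|]. rewrite sumR_S.
  destruct (Nat.eq_dec i m).
  - subst. rewrite sumR_zero; [ring|]. intros j Hj; apply H; lia.
  - rewrite IHm; [|lia|intros; apply H; lia]. rewrite (H m); [ring|lia|auto].
Qed.

Lemma sumR_square m f :
  sumR m (fun i => sumR m (fun k => f i k)) =
  sumR m (fun i => f i i) + sumR m (fun b => sumR b (fun a => f a b + f b a)).
Proof.
  induction m; [cbn; ring|].
  rewrite !sumR_S.
  rewrite (sumR_ext m (fun i => sumR (S m) (fun k => f i k))
             (fun i => sumR m (fun k => f i k) + f i m)) by (intros; apply sumR_S).
  rewrite sumR_plus, IHm, sumR_plus. change (sumR m (fun k => f m k)) with (sumR m (f m)). ring.
Qed.

Lemma fst_Csum m f : fst (Csum m f) = sumR m (fun i => fst (f i)).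
Proof. unfold Csum, sumR. induction (seq 0 m); simpl; auto. rewrite IHl; reflexivity. Qed.
Lemma snd_Csum m f : snd (Csum m f) = sumR m (fun i => snd (f i)).
Proof. unfold Csum, sumR. induction (seq 0 m); simpl; auto. rewrite IHl; reflexivity. Qed.

Ltac csum_unfold :=
  rewrite ?fst_Csum, ?snd_Csum; unfold Cadd, Cmul, Copp, Cconj, C0; cbn [fst snd];
  rewrite ?fst_Csum, ?snd_Csum.

Lemma Csum_S m f : Csum (S m) f = Cadd (Csum m f) (f m).
Proof. apply Ceq; unfold Cadd at 1; cbn [fst snd]; rewrite ?fst_Csum, ?snd_Csum, sumR_S; reflexivity. Qed.

Lemma Csum_ext m f g : (forall i, (i < m)%nat -> f i = g i) -> Csum m f = Csum m g.
Proof.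
  intros H; apply Ceq; rewrite ?fst_Csum, ?snd_Csum; apply sumR_ext; intros; rewrite H; auto.
Qed.

#[export] Instance Csum_proper : Proper (eq ==> pointwise_relation nat eq ==> eq) Csum.
Proof. intros m m' <- f g H. apply Csum_ext. intros; apply H. Qed.

Lemma Csum_plus m f g : Csum m (fun i => Cadd (f i) (g i)) = Cadd (Csum m f) (Csum m g).
Proof. apply Ceq; csum_unfold; apply sumR_plus. Qed.

Lemma Csum_mul_l m a f : Cmul a (Csum m f) = Csum m (fun i => Cmul a (f i)).
Proof. apply Ceq; csum_unfold; rewrite ?sumR_minus, ?sumR_plus, !sumR_scal; ring. Qed.

Lemma Csum_mul_r m a f : Cmul (Csum m f) a = Csum m (fun i => Cmul (f i) a).
Proof. apply Ceq; csum_unfold; rewrite ?sumR_minus, ?sumR_plus, !sumR_scal_r; ring. Qed.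

Lemma Csum_swap m n f :
  Csum m (fun i => Csum n (fun j => f i j)) = Csum n (fun j => Csum m (fun i => f i j)).
Proof.
  apply Ceq; rewrite ?fst_Csum, ?snd_Csum.
  - rewrite (sumR_ext m _ (fun i => sumR n (fun j => fst (f i j)))) by (intros; apply fst_Csum).
    rewrite sumR_swap; apply sumR_ext; intros; rewrite fst_Csum; reflexivity.
  - rewrite (sumR_ext m _ (fun i => sumR n (fun j => snd (f i j)))) by (intros; apply snd_Csum).
    rewrite sumR_swap; apply sumR_ext; intros; rewrite snd_Csum; reflexivity.
Qed.

Lemma Csum_zero m f : (forall i, (i < m)%nat -> f i = C0) -> Csum m f = C0.
Proof. intros H; apply Ceq; csum_unfold; apply sumR_zero; intros; rewrite H; auto. Qed.

Lemma Cconj_Csum m f : Cconj (Csum m f) = Csum m (fun i => Cconj (f i)).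
Proof. apply Ceq; csum_unfold; auto. rewrite <- sumR_opp; reflexivity. Qed.

Lemma meq_refl m A : meq m A A. Proof. intros i j _ _; reflexivity. Qed.
Lemma meq_sym m A B : meq m A B -> meq m B A. Proof. intros H i j Hi Hj; symmetry; auto. Qed.
Lemma meq_trans m A B C : meq m A B -> meq m B C -> meq m A C.
Proof. intros H1 H2 i j Hi Hj; rewrite H1; auto. Qed.

Lemma mmul_assoc m A B C i j :
  mmul m (mmul m A B) C i j = mmul m A (mmul m B C) i j.
Proof.
  unfold mmul.
  rewrite (Csum_ext m _ (fun k => Csum m (fun l => Cmul (Cmul (A i l) (B l k)) (C k j))))
    by (intros; apply Csum_mul_r).
  rewrite Csum_swap. apply Csum_ext. intros l _. rewrite Csum_mul_l.
  apply Csum_ext. intros; apply Cmul_assoc.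
Qed.

Lemma mmul_ext m A A' B B' : meq m A A' -> meq m B B' -> meq m (mmul m A B) (mmul m A' B').
Proof. intros H1 H2 i j Hi Hj; unfold mmul; apply Csum_ext; intros; rewrite H1, H2; auto. Qed.

Lemma mmul_madd_r m A B C i j : mmul m A (madd B C) i j = Cadd (mmul m A B i j) (mmul m A C i j).
Proof. unfold mmul, madd. rewrite <- Csum_plus. apply Csum_ext; intros; apply Cmul_add_r. Qed.
Lemma mmul_madd_l m A B C i j : mmul m (madd A B) C i j = Cadd (mmul m A C i j) (mmul m B C i j).
Proof. unfold mmul, madd. rewrite <- Csum_plus. apply Csum_ext; intros; apply Cmul_add_l. Qed.
Lemma mmul_mscale_r m c A B i j : mmul m A (mscale c B) i j = Cmul c (mmul m A B i j).
Proof. unfold mmul, mscale. rewrite Csum_mul_l. apply Csum_ext; intros; cring. Qed.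
Lemma mmul_mscale_l m c A B i j : mmul m (mscale c A) B i j = Cmul c (mmul m A B i j).
Proof. unfold mmul, mscale. rewrite Csum_mul_l. apply Csum_ext; intros; cring. Qed.

Lemma mtr_ext m A B : meq m A B -> mtr m A = mtr m B.
Proof. intros H; unfold mtr; apply Csum_ext; intros; apply H; auto. Qed.

Lemma mtr_madd m A B : mtr m (madd A B) = Cadd (mtr m A) (mtr m B).
Proof. unfold mtr, madd. apply Csum_plus. Qed.

Lemma mtr_mscale m c A : mtr m (mscale c A) = Cmul c (mtr m A).
Proof. unfold mtr, mscale. rewrite Csum_mul_l. reflexivity. Qed.

Lemma mtr_comm m A B : mtr m (mmul m A B) = mtr m (mmul m B A).
Proof.
  unfold mtr, mmul. rewrite Csum_swap.
  apply Csum_ext. intros; apply Csum_ext; intros; apply Cmul_comm.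
Qed.

Lemma mtr_assoc m A B C : mtr m (mmul m (mmul m A B) C) = mtr m (mmul m A (mmul m B C)).
Proof. unfold mtr. apply Csum_ext; intros; apply mmul_assoc. Qed.

Lemma mtr_mmul_madd_r m A B C :
  mtr m (mmul m A (madd B C)) = Cadd (mtr m (mmul m A B)) (mtr m (mmul m A C)).
Proof. rewrite <- mtr_madd. unfold mtr. apply Csum_ext; intros; apply mmul_madd_r. Qed.
Lemma mtr_mmul_madd_l m A B C :
  mtr m (mmul m (madd A B) C) = Cadd (mtr m (mmul m A C)) (mtr m (mmul m B C)).
Proof. rewrite <- mtr_madd. unfold mtr. apply Csum_ext; intros; apply mmul_madd_l. Qed.
Lemma mtr_mmul_mscale_l m c A B : mtr m (mmul m (mscale c A) B) = Cmul c (mtr m (mmul m A B)).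
Proof. rewrite <- mtr_mscale. unfold mtr. apply Csum_ext; intros; apply mmul_mscale_l. Qed.

Lemma herm_madd m A B : Herm m A -> Herm m B -> Herm m (madd A B).
Proof. intros HA HB i j Hi Hj. unfold madd. rewrite HA, HB by auto. cring. Qed.

Lemma herm_mscale m c A : snd c = 0 -> Herm m A -> Herm m (mscale c A).
Proof.
  intros Hc HA i j Hi Hj. unfold mscale. rewrite HA by auto.
  destruct c; simpl in Hc; subst. cring.
Qed.

Lemma herm_mmul_conj m A B : Herm m A -> Herm m B ->
  forall i j, (i < m)%nat -> (j < m)%nat -> mmul m A B j i = Cconj (mmul m B A i j).
Proof.
  intros HA HB i j Hi Hj. unfold mmul. rewrite Cconj_Csum. apply Csum_ext. intros k Hk.
  rewrite Cconj_mul, HA, HB by auto. apply Cmul_comm.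
Qed.

Lemma herm_diag_real m A i : Herm m A -> (i < m)%nat -> snd (A i i) = 0.
Proof. intros H Hi. apply self_conj_real. symmetry. apply H; auto. Qed.

Lemma herm_tr_real m A : Herm m A -> snd (mtr m A) = 0.
Proof.
  intros H. unfold mtr. rewrite snd_Csum. apply sumR_zero. intros; eapply herm_diag_real; eauto.
Qed.

Lemma herm_tr_mmul_real m A B : Herm m A -> Herm m B -> snd (mtr m (mmul m A B)) = 0.
Proof.
  intros HA HB. apply self_conj_real. unfold mtr. rewrite Cconj_Csum.
  rewrite (Csum_ext m _ (fun i => mmul m B A i i)).
  2:{ intros i Hi. rewrite <- herm_mmul_conj by auto. reflexivity. }
  apply mtr_comm.
Qed.

Lemma herm_sandwich m A B : Herm m A -> Herm m B -> Herm m (mmul m A (mmul m B A)).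
Proof.
  intros HA HB i j Hi Hj. unfold mmul. rewrite Cconj_Csum.
  setoid_rewrite Csum_mul_l. setoid_rewrite Cconj_Csum.
  rewrite Csum_swap. apply Csum_ext; intros x Hx. apply Csum_ext; intros y Hy.
  rewrite !Cconj_mul. rewrite (HA i x), (HB x y), (HA y j) by auto. cring.
Qed.

Lemma herm_gradFormula m rho M : Herm m rho -> Herm m M -> Herm m (gradFormula m rho M).
Proof.
  intros Hr HM. unfold gradFormula. apply herm_madd.
  - intros i j Hi Hj. unfold mscale, madd.
    rewrite (herm_mmul_conj m rho M Hr HM i j Hi Hj), (herm_mmul_conj m M rho HM Hr i j Hi Hj).
    cring.
  - apply herm_mscale; auto. unfold Copp; simpl. rewrite herm_tr_mmul_real by auto. ring.
Qed.

Lemma tr_gradFormula m rho M : mtr m rho = (1,0) -> mtr m (gradFormula m rho M) = C0.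
Proof.
  intros Ht. unfold gradFormula. rewrite mtr_madd, !mtr_mscale, mtr_madd, Ht.
  rewrite (mtr_comm m M rho). apply Ceq; cunfold; lra.
Qed.

Lemma PDeriv_unique f p E v1 v2 : PDeriv f p E v1 -> PDeriv f p E v2 -> v1 = v2.
Proof. unfold PDeriv. intros; eapply uniqueness_limite; eauto. Qed.

Lemma IsMF_herm m F rho M : IsMF m F rho M -> Herm m M.
Proof.
  intros H i j Hi Hj.
  assert (Hoff : forall a b, (a < b)%nat -> (b < m)%nat -> M b a = Cconj (M a b)).
  { intros a b Hab Hb.
    destruct (H a b ltac:(lia) Hb) as [H1 _]. destruct (H1 Hab) as (dx & dy & Px & Py & E1).
    destruct (H b a Hb ltac:(lia)) as [_ [H2 _]]. destruct (H2 Hab) as (dx' & dy' & Px' & Py' & E2).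
    rewrite E1, E2, (PDeriv_unique _ _ _ _ _ Px Px'), (PDeriv_unique _ _ _ _ _ Py Py').
    unfold Cconj; simpl. f_equal; lra. }
  destruct (lt_eq_lt_dec i j) as [[Hij|Hij]|Hij].
  - apply Hoff; auto.
  - subst. destruct (H j j Hi Hi) as [_ [_ H3]]. destruct (H3 eq_refl) as (dz & _ & E).
    rewrite E. unfold Cconj; simpl; f_equal; lra.
  - rewrite (Hoff j i Hij Hi), Cconj_conj. reflexivity.
Qed.

Lemma tangent_gradFormula m F rho M :
  Pdot m rho -> IsMF m F rho M -> Tangent m (gradFormula m rho M).
Proof.
  intros [Hr [_ Ht]] HM. split.
  - apply herm_gradFormula; auto. eapply IsMF_herm; eauto.
  - apply tr_gradFormula; auto.
Qed.

Lemma QF_trace m rho L L' S :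
  IsSLD m rho S L -> QFval m rho L L' = fst (mtr m (mmul m S L')).
Proof.
  intros H. unfold QFval.
  rewrite mtr_mmul_madd_r, <- !mtr_assoc.
  rewrite (mtr_comm m (mmul m rho L') L), <- mtr_assoc, <- mtr_mmul_madd_l.
  rewrite (mtr_ext m (mmul m S L') (mmul m (mscale (1/2,0) (madd (mmul m rho L) (mmul m L rho))) L')).
  - rewrite mtr_mmul_mscale_l. reflexivity.
  - apply mmul_ext; [apply meq_sym; exact H | apply meq_refl].
Qed.

Lemma QF_sym m rho L L' : QFval m rho L L' = QFval m rho L' L.
Proof.
  unfold QFval. do 2 f_equal. unfold mtr. apply Csum_ext; intros.
  unfold mmul at 1 2. apply Csum_ext; intros. f_equal. apply Cadd_comm.
Qed.

Lemma tr_rho_SLD m rho X L : IsSLD m rho X L -> mtr m (mmul m rho L) = mtr m X.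
Proof.
  intros H. rewrite (mtr_ext m X _ (meq_sym _ _ _ H)), mtr_mscale, mtr_madd.
  rewrite (mtr_comm m L rho). apply Ceq; unfold Cadd, Cmul; simpl; lra.
Qed.

Lemma gradFormula_pairing m rho M X L L' :
  mtr m X = C0 -> IsSLD m rho (gradFormula m rho M) L -> IsSLD m rho X L' ->
  QFval m rho L L' = fst (mtr m (mmul m M X)).
Proof.
  intros HX HG HXL.
  rewrite (QF_trace _ _ _ _ _ HG). unfold gradFormula.
  rewrite mtr_mmul_madd_l, (mtr_mmul_mscale_l m (Copp _) rho L'), (tr_rho_SLD _ _ _ _ HXL), HX.
  set (T := mtr m (mmul m (mscale (1/2,0) (madd (mmul m rho M) (mmul m M rho))) L')).
  assert (E : QFval m rho M L' = fst T) by (apply QF_trace; apply meq_refl).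
  rewrite QF_sym, (QF_trace _ _ _ _ _ HXL), mtr_comm in E.
  unfold Cadd, Cmul, C0; simpl. rewrite <- E. ring.
Qed.

(* Real coordinates of the space of Hermitian matrices: a direction is a
   diagonal entry z_l or the real/imaginary part x_ab, y_ab (a < b) of an
   off-diagonal entry; [dmat d] is the matching basis matrix of Defs. *)
Inductive dir := DZ (l : nat) | DX (a b : nat) | DY (a b : nat).
Definition dmat (d : dir) : CMat :=
  match d with DZ l => Ez l | DX a b => Ex a b | DY a b => Ey a b end.
Definition dcoord (d : dir) (A : CMat) : R :=
  match d with DZ l => fst (A l l) | DX a b => fst (A a b) | DY a b => snd (A a b) end.
Definition dvalid (m : nat) (d : dir) : Prop :=
  match d with DZ l => (l < m)%nat | DX a b => (a < b < m)%nat | DY a b => (a < b < m)%nat end.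
Definition dirs (m : nat) : list dir :=
  map DZ (seq 0 m) ++ flat_map (fun b => flat_map (fun a => [DX a b; DY a b]) (seq 0 b)) (seq 0 m).
Definition sumD (l : list dir) (h : dir -> R) : R := fold_right (fun d acc => h d + acc) 0 l.

Lemma sumD_ext l h1 h2 : (forall d, h1 d = h2 d) -> sumD l h1 = sumD l h2.
Proof. intros H; induction l; simpl; auto. rewrite H, IHl; auto. Qed.

Lemma sumD_app l1 l2 h : sumD (l1 ++ l2) h = sumD l1 h + sumD l2 h.
Proof. induction l1; simpl. ring. rewrite IHl1; ring. Qed.

Lemma sumD_map (g : nat -> dir) l h :
  sumD (map g l) h = fold_right Rplus 0 (map (fun i => h (g i)) l).
Proof. induction l; simpl; auto. rewrite IHl; auto. Qed.

Lemma sumD_flat (k : nat -> list dir) l h :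
  sumD (flat_map k l) h = fold_right Rplus 0 (map (fun i => sumD (k i) h) l).
Proof. induction l; simpl; auto. rewrite sumD_app, IHl; auto. Qed.

Lemma sumD_dirs m h : sumD (dirs m) h =
  sumR m (fun l => h (DZ l)) + sumR m (fun b => sumR b (fun a => h (DX a b) + h (DY a b))).
Proof.
  unfold dirs. rewrite sumD_app, sumD_map, sumD_flat. unfold sumR. f_equal.
  f_equal. apply map_ext. intros b. rewrite sumD_flat. f_equal. apply map_ext. intros a. simpl. ring.
Qed.

Lemma dirs_valid m d : In d (dirs m) -> dvalid m d.
Proof.
  unfold dirs. intros H. apply in_app_or in H. destruct H as [H|H].
  - apply in_map_iff in H. destruct H as (l & <- & Hl). apply in_seq in Hl. simpl; lia.
  - apply in_flat_map in H. destruct H as (b & Hb & H). apply in_seq in Hb.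
    apply in_flat_map in H. destruct H as (a & Ha & H). apply in_seq in Ha.
    simpl in H. destruct H as [<-|[<-|[]]]; simpl; lia.
Qed.

Lemma sumR2_single m f a0 b0 : (a0 < b0 < m)%nat ->
  (forall a b, (a < b < m)%nat -> (a <> a0 \/ b <> b0) -> f a b = 0) ->
  sumR m (fun b => sumR b (fun a => f a b)) = f a0 b0.
Proof.
  intros H0 H. rewrite (sumR_single m _ b0); [|lia|].
  - apply (sumR_single b0 (fun a => f a b0) a0); [lia|]. intros; apply H; lia.
  - intros b Hb Hne. apply sumR_zero. intros a Ha. apply H; lia.
Qed.

Lemma sumR2_zero m f : (forall a b, (a < b < m)%nat -> f a b = 0) ->
  sumR m (fun b => sumR b (fun a => f a b)) = 0.
Proof. intros H. apply sumR_zero. intros b Hb. apply sumR_zero. intros a Ha. apply H; lia. Qed.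

Ltac case_eqb := repeat match goal with
  | |- context [Nat.eqb ?x ?y] => destruct (Nat.eqb_spec x y)
  end; simpl; try lia.

Lemma dvalid_Dir m d : dvalid m d -> Dir m (dmat d).
Proof.
  destruct d; simpl; intros Hv.
  - right. exists l. auto.
  - left. exists a, b. repeat split; try lia. auto.
  - left. exists a, b. repeat split; try lia. auto.
Qed.

Lemma dmat_herm m d : dvalid m d -> Herm m (dmat d).
Proof.
  destruct d; simpl; intros Hv i j Hi Hj; [unfold Ez|unfold Ex|unfold Ey]; case_eqb; unfold Cconj, C0; simpl;
  f_equal; ring.
Qed.

Lemma dmat_bound d i j : Rabs (fst (dmat d i j)) <= 1 /\ Rabs (snd (dmat d i j)) <= 1.
Proof.
  destruct d; simpl; [unfold Ez|unfold Ex|unfold Ey]; case_eqb; unfold C0; simpl;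
  split; unfold Rabs; repeat destruct Rcase_abs; lra.
Qed.

Lemma dcoord_diff d A B : dcoord d (madd A (mscale (-1, 0) B)) = dcoord d A - dcoord d B.
Proof. destruct d; simpl; ring. Qed.

Lemma recon_fst m A i j : Herm m A -> (i < m)%nat -> (j < m)%nat ->
  sumD (dirs m) (fun d => dcoord d A * fst (dmat d i j)) = fst (A i j).
Proof.
  intros HA Hi Hj. rewrite sumD_dirs. simpl.
  destruct (lt_eq_lt_dec i j) as [[Hij|Hij]|Hij].
  - rewrite (sumR_zero m (fun l => _)).
    2:{ intros l Hl. unfold Ez. case_eqb; ring. }
    rewrite (sumR2_single m _ i j); [|lia|].
    + unfold Ex, Ey. case_eqb; ring.
    + intros a b Hab Hne. unfold Ex, Ey. case_eqb; ring.
  - subst. rewrite (sumR_single m _ j Hj). 2:{ intros l Hl Hne. unfold Ez. case_eqb; ring. }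
    rewrite sumR2_zero. unfold Ez; case_eqb; ring.
    intros a b Hab. unfold Ex, Ey. case_eqb; ring.
  - rewrite (sumR_zero m (fun l => _)).
    2:{ intros l Hl. unfold Ez. case_eqb; ring. }
    rewrite (sumR2_single m _ j i); [|lia|].
    + unfold Ex, Ey. case_eqb. rewrite (HA j i) by auto. simpl. ring.
    + intros a b Hab Hne. unfold Ex, Ey. case_eqb; ring.
Qed.

Lemma recon_snd m A i j : Herm m A -> (i < m)%nat -> (j < m)%nat ->
  sumD (dirs m) (fun d => dcoord d A * snd (dmat d i j)) = snd (A i j).
Proof.
  intros HA Hi Hj. rewrite sumD_dirs. simpl.
  rewrite (sumR_zero m (fun l => _)).
  2:{ intros l Hl. unfold Ez. case_eqb; ring. }
  destruct (lt_eq_lt_dec i j) as [[Hij|Hij]|Hij].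
  - rewrite (sumR2_single m _ i j); [|lia|].
    + unfold Ex, Ey. case_eqb; ring.
    + intros a b Hab Hne. unfold Ex, Ey. case_eqb; ring.
  - subst. rewrite sumR2_zero. rewrite (herm_diag_real m A j HA Hj); ring.
    intros a b Hab. unfold Ex, Ey. case_eqb; ring.
  - rewrite (sumR2_single m _ j i); [|lia|].
    + unfold Ex, Ey. case_eqb. rewrite (HA j i) by auto. simpl. ring.
    + intros a b Hab Hne. unfold Ex, Ey. case_eqb; ring.
Qed.

Definition wM (M : CMat) (d : dir) : R :=
  match d with DZ l => fst (M l l) | DX a b => 2 * fst (M a b) | DY a b => 2 * snd (M a b) end.

Lemma dF_trace m M X : Herm m M -> Herm m X ->
  sumD (dirs m) (fun d => wM M d * dcoord d X) = fst (mtr m (mmul m M X)).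
Proof.
  intros HM HX. rewrite sumD_dirs.
  assert (R : fst (mtr m (mmul m M X)) =
    sumR m (fun i => sumR m (fun k => fst (M i k) * fst (X k i) - snd (M i k) * snd (X k i)))).
  { unfold mtr, mmul. rewrite fst_Csum. apply sumR_ext. intros. rewrite fst_Csum. reflexivity. }
  rewrite R, sumR_square. simpl. f_equal.
  - apply sumR_ext. intros l Hl. rewrite (herm_diag_real m M l HM Hl). ring.
  - apply sumR_ext. intros b Hb. apply sumR_ext. intros a Ha.
    rewrite (HM a b), (HX a b) by lia. simpl. ring.
Qed.

Lemma wM_PDeriv m F rho M d : IsMF m F rho M -> dvalid m d -> PDeriv F rho (dmat d) (wM M d).
Proof.
  intros H Hv. destruct d; simpl in *.
  - destruct (H l l Hv Hv) as [_ [_ H3]]. destruct (H3 eq_refl) as (dz & P & E).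
    rewrite E; simpl; auto.
  - destruct (H a b ltac:(lia) ltac:(lia)) as [H1 _]. destruct (H1 ltac:(lia)) as (dx & dy & Px & Py & E).
    rewrite E; simpl. replace (2 * (dx / 2)) with dx by field. auto.
  - destruct (H a b ltac:(lia) ltac:(lia)) as [H1 _]. destruct (H1 ltac:(lia)) as (dx & dy & Px & Py & E).
    rewrite E; simpl. replace (2 * (dy / 2)) with dy by field. auto.
Qed.

Definition lim0 (phi : R -> R) (L : R) : Prop :=
  forall eps, 0 < eps -> exists eta, 0 < eta /\
    forall t, t <> 0 -> Rabs t < eta -> Rabs (phi t - L) < eps.

Lemma lim0_plus f g a b : lim0 f a -> lim0 g b -> lim0 (fun t => f t + g t) (a + b).
Proof.
  intros Hf Hg eps He.
  destruct (Hf (eps/2)) as (e1 & He1 & H1); [lra|].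
  destruct (Hg (eps/2)) as (e2 & He2 & H2); [lra|].
  exists (Rmin e1 e2). split. apply Rmin_pos; auto.
  intros t Ht Hlt. pose proof (Rmin_l e1 e2); pose proof (Rmin_r e1 e2).
  specialize (H1 t Ht ltac:(lra)). specialize (H2 t Ht ltac:(lra)).
  replace (f t + g t - (a + b)) with ((f t - a) + (g t - b)) by ring.
  eapply Rle_lt_trans. apply Rabs_triang. lra.
Qed.

Lemma lim0_const c : lim0 (fun _ => c) c.
Proof. intros eps He. exists 1. split. lra. intros. replace (c - c) with 0 by ring. rewrite Rabs_R0; lra. Qed.

Lemma lim0_scal c f a : lim0 f a -> lim0 (fun t => c * f t) (c * a).
Proof.
  intros Hf eps He.
  destruct (Hf (eps / (Rabs c + 1))) as (e1 & He1 & H1).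
  { apply Rdiv_lt_0_compat; auto. pose proof (Rabs_pos c); lra. }
  exists e1. split; auto. intros t Ht Hlt. specialize (H1 t Ht Hlt).
  replace (c * f t - c * a) with (c * (f t - a)) by ring. rewrite Rabs_mult.
  pose proof (Rabs_pos c). pose proof (Rabs_pos (f t - a)).
  apply Rle_lt_trans with (Rabs c * (eps / (Rabs c + 1))).
  apply Rmult_le_compat_l; lra.
  unfold Rdiv. rewrite <- Rmult_assoc. apply Rlt_le_trans with ((Rabs c + 1) * eps * / (Rabs c + 1)).
  apply Rmult_lt_compat_r. apply Rinv_0_lt_compat; lra. nra.
  right. field. lra.
Qed.

Lemma lim0_abs f : lim0 f 0 -> lim0 (fun t => Rabs (f t)) 0.
Proof.
  intros Hf eps He. destruct (Hf eps He) as (e & He' & H). exists e. split; auto.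
  intros t Ht Hlt. specialize (H t Ht Hlt). rewrite Rminus_0_r in *. rewrite Rabs_Rabsolu; auto.
Qed.

Lemma lim0_deriv f l : derivable_pt_lim f 0 l -> lim0 (fun t => (f t - f 0) / t) l.
Proof.
  intros H eps He. destruct (H eps He) as [d Hd]. exists d. split. apply cond_pos.
  intros t Ht Hlt. specialize (Hd t Ht Hlt). rewrite Rplus_0_l in Hd. exact Hd.
Qed.

Lemma lim0_cont f l : derivable_pt_lim f 0 l -> lim0 (fun t => f t - f 0) 0.
Proof.
  intros H eps He. destruct (H 1 ltac:(lra)) as [d Hd].
  exists (Rmin d (eps / (Rabs l + 1))). split.
  { apply Rmin_pos. apply cond_pos. apply Rdiv_lt_0_compat; auto. pose proof (Rabs_pos l); lra. }
  intros t Ht Hlt. pose proof (Rmin_l d (eps / (Rabs l + 1))); pose proof (Rmin_r d (eps / (Rabs l + 1))).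
  specialize (Hd t Ht ltac:(lra)). rewrite Rplus_0_l in Hd. rewrite Rminus_0_r.
  set (q := (f t - f 0) / t) in *.
  assert (E : f t - f 0 = q * t) by (unfold q; field; auto).
  rewrite E, Rabs_mult.
  assert (Rabs q <= Rabs l + 1).
  { replace q with ((q - l) + l) by ring. eapply Rle_trans. apply Rabs_triang. lra. }
  pose proof (Rabs_pos q). pose proof (Rabs_pos t). pose proof (Rabs_pos l).
  apply Rle_lt_trans with ((Rabs l + 1) * Rabs t). apply Rmult_le_compat_r; lra.
  apply Rlt_le_trans with ((Rabs l + 1) * (eps / (Rabs l + 1))).
  apply Rmult_lt_compat_l; lra. right; field; lra.
Qed.

Lemma deriv_shift (psi phi : R -> R) s v :
  derivable_pt_lim psi 0 v -> (forall u, psi u = phi (s + u)) -> derivable_pt_lim phi s v.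
Proof.
  intros H E eps He. destruct (H eps He) as [d Hd]. exists d. intros h Hh Hlt.
  specialize (Hd h Hh Hlt). rewrite !E, Rplus_0_l, Rplus_0_r in Hd. exact Hd.
Qed.


Lemma lim0_ext f g L : (forall t, f t = g t) -> lim0 f L -> lim0 g L.
Proof.
  intros E H eps He. destruct (H eps He) as (e & He' & Hh).
  exists e. split; auto. intros; rewrite <- E; auto.
Qed.

Lemma mvt_segment (phi phi' : R -> R) (dl : R) :
  (forall s, Rabs s <= Rabs dl -> derivable_pt_lim phi s (phi' s)) ->
  exists xi, Rabs xi <= Rabs dl /\ phi dl - phi 0 = phi' xi * dl.
Proof.
  intros H. destruct (Rtotal_order dl 0) as [Hl|[He|Hg]].
  - destruct (MVT_cor2 phi phi' dl 0 Hl) as (c & Ec & Hc).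
    { intros c Hc. apply H. rewrite !Rabs_left1 by lra. lra. }
    exists c. split. rewrite !Rabs_left1 by lra. lra. rewrite <- (Ropp_involutive (phi dl - phi 0)).
    replace (- (phi dl - phi 0)) with (phi 0 - phi dl) by ring. rewrite Ec. ring.
  - subst. exists 0. split. right; reflexivity. ring.
  - destruct (MVT_cor2 phi phi' 0 dl Hg) as (c & Ec & Hc).
    { intros c Hc. apply H. rewrite !Rabs_right by lra. lra. }
    exists c. split. rewrite !Rabs_right by lra. lra. rewrite Ec. ring.
Qed.


Lemma prod_est a b w c e1 e2 eps : 0 < eps ->
  Rabs (a - w) < e1 -> Rabs (b - c) < e2 -> e2 <= 1 ->
  e2 <= eps / (2 * (Rabs w + 1)) -> e1 = eps / (2 * (Rabs c + 1)) ->
  Rabs (a * b - w * c) < eps.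
Proof.
  intros He H1 H2 H3 H4 H5.
  replace (a * b - w * c) with ((a - w) * b + w * (b - c)) by ring.
  eapply Rle_lt_trans. apply Rabs_triang. rewrite !Rabs_mult.
  pose proof (Rabs_pos w). pose proof (Rabs_pos c). pose proof (Rabs_pos (a - w)).
  pose proof (Rabs_pos b). pose proof (Rabs_pos (b - c)).
  assert (Hb : Rabs b <= Rabs c + 1).
  { replace b with ((b - c) + c) by ring. eapply Rle_trans. apply Rabs_triang. lra. }
  assert (T1 : Rabs (a - w) * Rabs b <= e1 * (Rabs c + 1)) by nra.
  assert (E1 : e1 * (Rabs c + 1) = eps / 2) by (rewrite H5; field; lra).
  assert (T2 : Rabs w * Rabs (b - c) <= Rabs w * e2) by nra.
  assert (T3 : Rabs w * e2 <= Rabs w * (eps / (2 * (Rabs w + 1)))) by nra.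
  assert (E3 : Rabs w * (eps / (2 * (Rabs w + 1))) < eps / 2).
  { apply Rmult_lt_reg_r with (2 * (Rabs w + 1)). lra.
    replace (Rabs w * (eps / (2 * (Rabs w + 1))) * (2 * (Rabs w + 1))) with (Rabs w * eps) by (field; lra).
    replace (eps / 2 * (2 * (Rabs w + 1))) with (eps * Rabs w + eps) by (field; lra). nra. }
  lra.
Qed.
(* The staircase from rho towards g(t): starting at rho, add for each
   direction d of l the increment of the d-coordinate of g between 0 and t.
   With l = dirs m it reaches g(t) (stair_full). *)
Definition incr (rho : CMat) (g : R -> CMat) (d : dir) (t : R) : R :=
  dcoord d (g t) - dcoord d rho.
Definition stair (rho : CMat) (g : R -> CMat) (l : list dir) (t : R) : CMat :=
  fold_right (fun d acc => madd acc (mscale (incr rho g d t, 0) (dmat d))) rho l.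

Lemma stair_fst rho g l t i j :
  fst (stair rho g l t i j) = fst (rho i j) + sumD l (fun d => incr rho g d t * fst (dmat d i j)).
Proof. induction l; simpl; [ring | rewrite IHl; ring]. Qed.
Lemma stair_snd rho g l t i j :
  snd (stair rho g l t i j) = snd (rho i j) + sumD l (fun d => incr rho g d t * snd (dmat d i j)).
Proof. induction l; simpl; [ring | rewrite IHl; ring]. Qed.

Lemma stair_herm m rho g l t : Herm m rho -> Forall (dvalid m) l -> Herm m (stair rho g l t).
Proof.
  intros Hr Hl. induction Hl; simpl; auto.
  apply herm_madd; auto. apply herm_mscale; auto. apply dmat_herm; auto.
Qed.

Lemma stair_full m rho g t : Herm m rho -> Herm m (g t) -> meq m (stair rho g (dirs m) t) (g t).
Proof.
  intros Hr Hg i j Hi Hj.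
  set (D := madd (g t) (mscale (-1, 0) rho)).
  assert (HD : Herm m D) by (apply herm_madd; auto; apply herm_mscale; simpl; auto).
  assert (E : forall d, incr rho g d t = dcoord d D)
    by (intros; unfold D; rewrite dcoord_diff; reflexivity).
  apply Ceq.
  - rewrite stair_fst, (sumD_ext _ _ (fun d => dcoord d D * fst (dmat d i j)))
      by (intros; rewrite E; auto).
    rewrite recon_fst by auto. unfold D, madd, mscale, Cadd, Cmul; simpl. ring.
  - rewrite stair_snd, (sumD_ext _ _ (fun d => dcoord d D * snd (dmat d i j)))
      by (intros; rewrite E; auto).
    rewrite recon_snd by auto. unfold D, madd, mscale, Cadd, Cmul; simpl. ring.
Qed.

Lemma sumD_abs_le l (c : dir -> R) (e : dir -> R) :
  (forall d, Rabs (e d) <= 1) -> Rabs (sumD l (fun d => c d * e d)) <= sumD l (fun d => Rabs (c d)).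
Proof.
  intros He. induction l; simpl; [rewrite Rabs_R0; lra|].
  eapply Rle_trans; [apply Rabs_triang|]. rewrite Rabs_mult.
  pose proof (He a). pose proof (Rabs_pos (c a)).
  assert (Rabs (c a) * Rabs (e a) <= Rabs (c a)) by nra. lra.
Qed.

Lemma stair_dist m rho g l t s d :
  mdist m rho (madd (stair rho g l t) (mscale (s, 0) (dmat d))) <=
  INR m * (INR m * (2 * (Rabs s + sumD l (fun d' => Rabs (incr rho g d' t))))).
Proof.
  unfold mdist. rewrite <- !sumR_const. apply sumR_le; intros i _. apply sumR_le; intros j _.
  unfold madd, mscale, Cadd, Cmul. cbn [fst snd]. rewrite stair_fst, stair_snd.
  destruct (dmat_bound d i j) as [B1 B2].
  pose proof (sumD_abs_le l (fun d' => incr rho g d' t) (fun d' => fst (dmat d' i j))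
    (fun d' => proj1 (dmat_bound d' i j))) as S1.
  pose proof (sumD_abs_le l (fun d' => incr rho g d' t) (fun d' => snd (dmat d' i j))
    (fun d' => proj2 (dmat_bound d' i j))) as S2.
  set (A1 := sumD l (fun d' => incr rho g d' t * fst (dmat d' i j))) in *.
  set (A2 := sumD l (fun d' => incr rho g d' t * snd (dmat d' i j))) in *.
  replace (fst (rho i j) - (fst (rho i j) + A1 + (s * fst (dmat d i j) - 0 * snd (dmat d i j))))
    with (- (A1 + s * fst (dmat d i j))) by ring.
  replace (snd (rho i j) - (snd (rho i j) + A2 + (s * snd (dmat d i j) + 0 * fst (dmat d i j))))
    with (- (A2 + s * snd (dmat d i j))) by ring.
  rewrite !Rabs_Ropp.
  pose proof (Rabs_triang A1 (s * fst (dmat d i j))).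
  pose proof (Rabs_triang A2 (s * snd (dmat d i j))).
  rewrite Rabs_mult in *. pose proof (Rabs_pos s).
  assert (Rabs s * Rabs (fst (dmat d i j)) <= Rabs s) by nra.
  assert (Rabs s * Rabs (snd (dmat d i j)) <= Rabs s) by nra.
  lra.
Qed.

Section ChainRule.
Variables (m : nat) (U : CMat -> Prop) (F : CMat -> R).
Hypothesis HU : OpenHerm m U.
Hypothesis HFext : forall A B, meq m A B -> F A = F B.
Hypothesis HF1 : CkOn m U 1 F.

Lemma segment_mvt (pd : CMat -> R) (B E : CMat) (dl : R) :
  (forall p, U p -> PDeriv F p E (pd p)) ->
  (forall s, Rabs s <= Rabs dl -> U (madd B (mscale (s, 0) E))) ->
  exists xi, Rabs xi <= Rabs dl /\
    F (madd B (mscale (dl, 0) E)) - F B = pd (madd B (mscale (xi, 0) E)) * dl.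
Proof.
  intros Hpd Hseg.
  set (phi := fun s => F (madd B (mscale (s, 0) E))).
  assert (Hder : forall s, Rabs s <= Rabs dl -> derivable_pt_lim phi s (pd (madd B (mscale (s, 0) E)))).
  { intros s Hs. eapply deriv_shift; [apply (Hpd _ (Hseg s Hs))|].
    intros u. unfold phi. apply HFext. intros i j _ _. unfold madd, mscale. cring. }
  destruct (mvt_segment phi _ dl Hder) as (xi & Hxi & E0).
  exists xi. split; auto. rewrite <- E0. unfold phi. f_equal.
  apply HFext. intros i j _ _. unfold madd, mscale. cring.
Qed.

Variables (rho : CMat) (g : R -> CMat) (X : CMat).
Hypothesis Hrho : U rho.
Hypothesis Hrh : Herm m rho.
Hypothesis Hg0 : meq m (g 0) rho.
Hypothesis Hgd : forall i j, (i < m)%nat -> (j < m)%nat ->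
     derivable_pt_lim (fun t => fst (g t i j)) 0 (fst (X i j)) /\
     derivable_pt_lim (fun t => snd (g t i j)) 0 (snd (X i j)).

Lemma coord_deriv d : dvalid m d -> derivable_pt_lim (fun t => dcoord d (g t)) 0 (dcoord d X).
Proof. destruct d; simpl; intros Hv; [apply (Hgd l l) | apply (Hgd a b) | apply (Hgd a b)]; lia. Qed.

Lemma coord_0 d : dvalid m d -> dcoord d (g 0) = dcoord d rho.
Proof. destruct d; simpl; intros Hv; rewrite Hg0; auto; lia. Qed.

Lemma incr_quot d : dvalid m d -> lim0 (fun t => incr rho g d t / t) (dcoord d X).
Proof.
  intros Hv. eapply lim0_ext; [|apply lim0_deriv, coord_deriv, Hv].
  intros t; simpl. unfold incr. rewrite coord_0; auto.
Qed.

Lemma incr_small d : dvalid m d -> lim0 (fun t => incr rho g d t) 0.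
Proof.
  intros Hv. eapply lim0_ext; [|apply (lim0_cont _ _ (coord_deriv d Hv))].
  intros t; simpl. unfold incr. rewrite coord_0; auto.
Qed.

Lemma step_small d l : dvalid m d -> Forall (dvalid m) l ->
  lim0 (fun t => INR m * (INR m * (2 * (Rabs (incr rho g d t)
                   + sumD l (fun d' => Rabs (incr rho g d' t)))))) 0.
Proof.
  intros Hv Hl. replace 0 with (INR m * (INR m * (2 * (0 + 0)))) by ring.
  apply lim0_scal, lim0_scal, lim0_scal, lim0_plus; [apply lim0_abs, incr_small; auto|].
  clear Hv. induction Hl; simpl; [apply lim0_const|].
  replace 0 with (0 + 0) by ring. apply lim0_plus; auto. apply lim0_abs, incr_small; auto.
Qed.

Lemma step_point_near l d t s delta : dvalid m d -> Forall (dvalid m) l ->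
  Rabs s <= Rabs (incr rho g d t) ->
  Rabs (INR m * (INR m * (2 * (Rabs (incr rho g d t)
          + sumD l (fun d' => Rabs (incr rho g d' t)))))) < delta ->
  Herm m (madd (stair rho g l t) (mscale (s, 0) (dmat d))) /\
  mdist m rho (madd (stair rho g l t) (mscale (s, 0) (dmat d))) < delta.
Proof.
  intros Hv Hl Hs Hsize. split.
  - apply herm_madd; [apply stair_herm; auto|]. apply herm_mscale; auto. apply dmat_herm; auto.
  - pose proof (stair_dist m rho g l t s d) as Md.
    set (T := sumD l (fun d' => Rabs (incr rho g d' t))) in *.
    assert (INR m * (INR m * (2 * (Rabs s + T))) <=
            INR m * (INR m * (2 * (Rabs (incr rho g d t) + T)))).
    { pose proof (pos_INR m). apply Rmult_le_compat_l; auto. apply Rmult_le_compat_l; auto. lra. }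
    pose proof (Rle_abs (INR m * (INR m * (2 * (Rabs (incr rho g d t) + T))))). lra.
Qed.

(* The difference quotient of one step of the staircase tends to
   (dF/d coordinate d at rho) * (coordinate d of X): by the mean value
   theorem it is a partial derivative at a point near rho, which is
   continuous, times incr/t. *)
Lemma step_lim d l w : dvalid m d -> Forall (dvalid m) l -> PDeriv F rho (dmat d) w ->
  lim0 (fun t => (F (madd (stair rho g l t) (mscale (incr rho g d t, 0) (dmat d)))
                  - F (stair rho g l t)) / t)
       (w * dcoord d X).
Proof.
  intros Hv Hl Hw.
  destruct HF1 as [_ HP]. destruct (HP (dmat d) (dvalid_Dir m d Hv)) as (pd & Hpd & Hcont).
  simpl in Hcont.
  assert (Hpw : pd rho = w) by (eapply PDeriv_unique; [apply Hpd; auto | exact Hw]).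
  set (c := dcoord d X).
  intros eps He.
  set (e1 := eps / (2 * (Rabs c + 1))).
  assert (He1 : 0 < e1) by (unfold e1; apply Rdiv_lt_0_compat; [lra|]; pose proof (Rabs_pos c); lra).
  set (e2 := Rmin 1 (eps / (2 * (Rabs w + 1)))).
  assert (He2 : 0 < e2).
  { unfold e2; apply Rmin_pos; [lra|].
    apply Rdiv_lt_0_compat; [lra|]; pose proof (Rabs_pos w); lra. }
  destruct (Hcont rho Hrho e1 He1) as (d1 & Hd1 & Hc1).
  destruct HU as [_ HUo]. destruct (HUo rho Hrho) as (r0 & Hr0 & Hr0U).
  destruct (incr_quot d Hv e2 He2) as (eta2 & Heta2 & Hq).
  destruct (step_small d l Hv Hl (Rmin d1 r0) (Rmin_pos _ _ Hd1 Hr0)) as (eta3 & Heta3 & Hsm).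
  exists (Rmin eta2 eta3). split; [apply Rmin_pos; auto|].
  intros t Ht Hlt. pose proof (Rmin_l eta2 eta3); pose proof (Rmin_r eta2 eta3).
  specialize (Hq t Ht ltac:(lra)). specialize (Hsm t Ht ltac:(lra)).
  rewrite Rminus_0_r in Hsm. pose proof (Rmin_l d1 r0); pose proof (Rmin_r d1 r0).
  set (B := stair rho g l t) in *. set (dl := incr rho g d t) in *.
  assert (Hnear : forall s, Rabs s <= Rabs dl ->
     U (madd B (mscale (s, 0) (dmat d))) /\ mdist m rho (madd B (mscale (s, 0) (dmat d))) < d1).
  { intros s Hs. destruct (step_point_near l d t s (Rmin d1 r0) Hv Hl Hs Hsm) as [Hh Hdist].
    fold B in Hh, Hdist.
    split; [apply Hr0U; [exact Hh | lra] | lra]. }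
  destruct (segment_mvt pd B (dmat d) dl Hpd (fun s Hs => proj1 (Hnear s Hs))) as (xi & Hxi & Emvt).
  rewrite Emvt.
  replace (pd (madd B (mscale (xi, 0) (dmat d))) * dl / t) with
    (pd (madd B (mscale (xi, 0) (dmat d))) * (dl / t)) by (field; auto).
  destruct (Hnear xi Hxi) as [HUx Hdx].
  specialize (Hc1 _ HUx Hdx). rewrite Hpw in Hc1.
  apply (prod_est _ _ _ _ e1 e2 eps); auto; unfold e2; [apply Rmin_l | apply Rmin_r].
Qed.

Lemma stair_lim l (w : dir -> R) : Forall (dvalid m) l ->
  (forall d, dvalid m d -> PDeriv F rho (dmat d) (w d)) ->
  lim0 (fun t => (F (stair rho g l t) - F rho) / t) (sumD l (fun d => w d * dcoord d X)).
Proof.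
  intros Hl Hw. induction Hl; simpl.
  - eapply lim0_ext; [|apply lim0_const]. intros t; simpl. unfold Rdiv; ring.
  - eapply lim0_ext; [|apply lim0_plus; [apply (step_lim x l (w x)); auto | apply IHHl]].
    intros t; simpl. unfold Rdiv; ring.
Qed.

Lemma chain_rule (w : dir -> R) :
  (exists eps, 0 < eps /\ forall t, Rabs t < eps -> Herm m (g t)) ->
  (forall d, dvalid m d -> PDeriv F rho (dmat d) (w d)) ->
  derivable_pt_lim (fun t => F (g t)) 0 (sumD (dirs m) (fun d => w d * dcoord d X)).
Proof.
  intros (e0 & He0 & Hgh) Hw.
  assert (Hall : Forall (dvalid m) (dirs m)) by (apply Forall_forall; intros; apply dirs_valid; auto).
  intros eps He. destruct (stair_lim (dirs m) w Hall Hw eps He) as (e & Hepos & H).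
  assert (Hmin : 0 < Rmin e e0) by (apply Rmin_pos; auto).
  exists (mkposreal _ Hmin). intros h Hh Hlt. simpl in Hlt.
  pose proof (Rmin_l e e0); pose proof (Rmin_r e e0).
  specialize (H h Hh ltac:(lra)).
  rewrite Rplus_0_l, (HFext (g 0) rho Hg0).
  rewrite <- (HFext _ _ (stair_full m rho g h Hrh (Hgh h ltac:(lra)))). exact H.
Qed.
End ChainRule.

Lemma gradFormula_is_grad m U F (HU : OpenHerm m U) (HPU : forall p, Pdot m p -> U p)
  (HFext : forall A B, meq m A B -> F A = F B) (HF : SmoothOn m U F) rho M :
  Pdot m rho -> IsMF m F rho M -> IsGrad m F rho (gradFormula m rho M).
Proof.
  intros Hp HM. split; [eapply tangent_gradFormula; eauto|].
  intros X [HXh HXt] L L' HL HL' g [[e0 [He0 Hcurve]] [Hg0 Hgd]].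
  rewrite (gradFormula_pairing m rho M X L L' HXt HL HL').
  rewrite <- dF_trace by (auto; eapply IsMF_herm; eauto).
  pose proof (HPU rho Hp) as HUr. destruct Hp as [Hrh _].
  apply (chain_rule m U F HU HFext (HF 1%nat) rho g X HUr Hrh Hg0 Hgd).
  - exists e0. split; auto. intros t Ht. apply Hcurve; auto.
  - intros d Hv. eapply wM_PDeriv; eauto.
Qed.

Definition Bf (m : nat) (A : CMat) (u v : nat -> Cx) : Cx :=
  Csum m (fun i => Csum m (fun j => Cmul (Cconj (u i)) (Cmul (A i j) (v j)))).
Definition qf (m : nat) (A : CMat) (v : nat -> Cx) : Cx := Bf m A v v.
Definition ctr (L : CMat) : CMat := fun i j => Cconj (L j i).
Definition zeroM : CMat := fun _ _ => C0.

Lemma qf_nonneg m A v : PosDef m A -> 0 <= fst (qf m A v).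
Proof.
  intros H. destruct (classic (exists i, (i < m)%nat /\ v i <> C0)) as [Ex|NEx].
  - left. apply (H v Ex).
  - right. symmetry. unfold qf, Bf. rewrite Csum_zero; [reflexivity|].
    intros i Hi. apply Csum_zero. intros j Hj.
    assert (Hv : v i = C0) by (apply NNPP; intros Hn; apply NEx; eauto).
    rewrite Hv. cring.
Qed.

Lemma qf_zero m A v : PosDef m A -> fst (qf m A v) = 0 -> forall i, (i < m)%nat -> v i = C0.
Proof.
  intros H Hz i Hi. apply NNPP; intros Hn.
  pose proof (H v (ex_intro _ i (conj Hi Hn))). unfold qf, Bf in Hz. lra.
Qed.

Lemma tr_col m A L : mtr m (mmul m (ctr L) (mmul m A L)) = Csum m (fun j => qf m A (fun i => L i j)).
Proof.
  unfold mtr, mmul, qf, Bf, ctr. apply Csum_ext. intros j Hj. apply Csum_ext. intros i Hi.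
  rewrite Csum_mul_l. reflexivity.
Qed.

Lemma tr_row m A L :
  mtr m (mmul m (ctr L) (mmul m L A)) = Csum m (fun i => qf m A (fun k => Cconj (L i k))).
Proof.
  unfold mtr, mmul, qf, Bf, ctr.
  rewrite (Csum_ext m _ (fun j => Csum m (fun i => Csum m (fun k =>
             Cmul (Cconj (L i j)) (Cmul (L i k) (A k j))))))
    by (intros; apply Csum_ext; intros; apply Csum_mul_l).
  rewrite Csum_swap. apply Csum_ext. intros i Hi.
  rewrite Csum_swap. apply Csum_ext. intros k Hk. apply Csum_ext. intros j Hj.
  rewrite Cconj_conj. cring.
Qed.

Lemma sum_qf_nonneg m A f : PosDef m A -> 0 <= fst (Csum m (fun j => qf m A (f j))).
Proof. intros H. rewrite fst_Csum. apply sumR_nonneg. intros; apply qf_nonneg; auto. Qed.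

Lemma sum_qf_zero m A f : PosDef m A -> fst (Csum m (fun j => qf m A (f j))) = 0 ->
  forall j i, (j < m)%nat -> (i < m)%nat -> f j i = C0.
Proof.
  intros H Hz j i Hj Hi. rewrite fst_Csum in Hz.
  apply (qf_zero m A (f j) H); auto.
  apply (sumR_nonneg_zero m (fun j => fst (qf m A (f j)))); auto.
  intros; apply qf_nonneg; auto.
Qed.

(* The SLD equation has at most one solution: rho L + L rho = 0 forces L = 0,
   since tr(L^*(rho L + L rho)) is a sum of nonnegative terms qf rho (.). *)
Lemma sld_inj m rho L : PosDef m rho ->
  meq m (madd (mmul m rho L) (mmul m L rho)) zeroM -> meq m L zeroM.
Proof.
  intros Hp Hz.
  assert (T : mtr m (mmul m (ctr L) (madd (mmul m rho L) (mmul m L rho))) = C0).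
  { rewrite (mtr_ext m _ (mmul m (ctr L) zeroM)) by (apply mmul_ext; [apply meq_refl|exact Hz]).
    unfold mtr. apply Csum_zero. intros i Hi. unfold mmul. apply Csum_zero. intros.
    unfold zeroM. cring. }
  rewrite mtr_mmul_madd_r, tr_col, tr_row in T.
  apply (f_equal fst) in T. unfold Cadd in T; simpl in T.
  pose proof (sum_qf_nonneg m rho (fun j i => L i j) Hp).
  pose proof (sum_qf_nonneg m rho (fun i k => Cconj (L i k)) Hp).
  intros i j Hi Hj. apply (sum_qf_zero m rho (fun j i => L i j) Hp); auto. lra.
Qed.

(* Complex m x m matrices are encoded as vectors of
   R^(2 m^2), the entry (i, j) occupying the coordinates 2(im+j) and
   2(im+j)+1; the SLD map becomes a real linear endomorphism, injective by
   sld_inj, hence surjective. *)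
Section SLDExistence.
Variables (m : nat) (rho : CMat).
Hypothesis Hpd : PosDef m rho.

Definition dec (x : nat -> R) : CMat :=
  fun i j => (x (2 * (i * m + j))%nat, x (2 * (i * m + j) + 1)%nat).
Definition enc (A : CMat) (k : nat) : R :=
  (if Nat.even k then fst else snd) (A (k / 2 / m)%nat (k / 2 mod m)%nat).
Definition sld_map (A : CMat) : CMat := mscale (1/2, 0) (madd (mmul m rho A) (mmul m A rho)).
Definition sld_coords (x : nat -> R) (k : nat) : R := enc (sld_map (dec x)) k.

Lemma index_cases k : (k < 2 * (m * m))%nat -> exists i j, (i < m)%nat /\ (j < m)%nat /\
  (k = 2 * (i * m + j) \/ k = 2 * (i * m + j) + 1)%nat.
Proof.
  intros Hk. assert (Hm : m <> 0%nat) by (intros ->; lia).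
  exists (k / 2 / m)%nat, (k / 2 mod m)%nat. split; [|split].
  - apply Nat.Div0.div_lt_upper_bound, Nat.Div0.div_lt_upper_bound. lia.
  - apply Nat.mod_upper_bound; auto.
  - pose proof (Nat.div_mod (k / 2) m Hm). pose proof (Nat.div_mod k 2 ltac:(lia)).
    pose proof (Nat.mod_upper_bound k 2 ltac:(lia)). lia.
Qed.

Lemma enc_entry A i j : (i < m)%nat -> (j < m)%nat ->
  enc A (2 * (i * m + j)) = fst (A i j) /\ enc A (2 * (i * m + j) + 1) = snd (A i j).
Proof.
  intros Hi Hj.
  assert (Hq : forall b, (b < 2)%nat -> ((2 * (i * m + j) + b) / 2 / m = i /\
                                         (2 * (i * m + j) + b) / 2 mod m = j)%nat).
  { intros b Hb. replace ((2 * (i * m + j) + b) / 2)%nat with (i * m + j)%nat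
      by (apply (Nat.div_unique _ _ _ b); lia).
    split; symmetry; [apply (Nat.div_unique _ _ _ j) | apply (Nat.mod_unique _ _ i)]; lia. }
  unfold enc. destruct (Hq 0%nat ltac:(lia)) as [E1 E2]. destruct (Hq 1%nat ltac:(lia)) as [E3 E4].
  rewrite Nat.add_0_r in E1, E2. rewrite E1, E2, E3, E4, Nat.even_odd, Nat.even_even. auto.
Qed.

Lemma sld_map_pt A B : (forall i j, A i j = B i j) -> forall i j, sld_map A i j = sld_map B i j.
Proof.
  intros H i j. unfold sld_map, mscale, madd, mmul.
  f_equal. f_equal; apply Csum_ext; intros; rewrite !H; auto.
Qed.

Lemma sld_map_add A B i j : sld_map (madd A B) i j = Cadd (sld_map A i j) (sld_map B i j).
Proof. unfold sld_map, mscale, madd at 1. rewrite mmul_madd_r, mmul_madd_l. cring. Qed.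

Lemma sld_map_scale c A i j : sld_map (mscale (c, 0) A) i j = Cmul (c, 0) (sld_map A i j).
Proof. unfold sld_map, mscale at 1 4, madd. rewrite mmul_mscale_r, mmul_mscale_l. cring. Qed.

Lemma sld_coords_add x y k : sld_coords (fun i => x i + y i) k = sld_coords x k + sld_coords y k.
Proof.
  unfold sld_coords, enc.
  rewrite (sld_map_pt _ (madd (dec x) (dec y))), sld_map_add by reflexivity.
  destruct (Nat.even k); reflexivity.
Qed.

Lemma sld_coords_scale c x k : sld_coords (fun i => c * x i) k = c * sld_coords x k.
Proof.
  unfold sld_coords, enc.
  rewrite (sld_map_pt _ (mscale (c, 0) (dec x))), sld_map_scale by (intros; unfold dec; cring).
  destruct (Nat.even k); simpl; ring.
Qed.

Lemma sld_coords_local x y : (forall i, (i < 2 * (m * m))%nat -> x i = y i) ->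
  forall k, (k < 2 * (m * m))%nat -> sld_coords x k = sld_coords y k.
Proof.
  intros H k Hk.
  assert (E : meq m (dec x) (dec y)).
  { intros i j Hi Hj. unfold dec. rewrite !H by nia. reflexivity. }
  assert (E' : meq m (sld_map (dec x)) (sld_map (dec y))).
  { intros i j Hi Hj. unfold sld_map, mscale, madd.
    rewrite (mmul_ext m _ _ _ _ (meq_refl m rho) E i j Hi Hj).
    rewrite (mmul_ext m _ _ _ _ E (meq_refl m rho) i j Hi Hj). reflexivity. }
  destruct (index_cases k Hk) as (i & j & Hi & Hj & [-> | ->]); unfold sld_coords;
    destruct (enc_entry (sld_map (dec x)) i j Hi Hj) as [Ex1 Ex2];
    destruct (enc_entry (sld_map (dec y)) i j Hi Hj) as [Ey1 Ey2];
    rewrite ?Ex1, ?Ex2, ?Ey1, ?Ey2, E'; auto.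
Qed.

Lemma sld_coords_inj x : (forall k, (k < 2 * (m * m))%nat -> sld_coords x k = 0) ->
  forall i, (i < 2 * (m * m))%nat -> x i = 0.
Proof.
  intros H i Hi.
  assert (HZ : meq m (dec x) zeroM).
  { apply (sld_inj m rho); auto. intros a b Ha Hb.
    destruct (enc_entry (sld_map (dec x)) a b Ha Hb) as [E1 E2].
    pose proof (H (2 * (a * m + b))%nat ltac:(nia)) as Z1.
    pose proof (H (2 * (a * m + b) + 1)%nat ltac:(nia)) as Z2.
    unfold sld_coords in Z1, Z2. rewrite E1 in Z1. rewrite E2 in Z2.
    unfold sld_map, mscale, madd, Cmul, Cadd in Z1, Z2. simpl in Z1, Z2.
    unfold madd, zeroM. apply Ceq; simpl; lra. }
  destruct (index_cases i Hi) as (a & b & Ha & Hb & [-> | ->]);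
    pose proof (HZ a b Ha Hb) as Z; unfold dec, zeroM, C0 in Z; injection Z; auto.
Qed.

Lemma sld_exists Y : exists L, IsSLD m rho Y L.
Proof.
  destruct (RealLinearAlgebra.injective_linear_surjective (2 * (m * m)) sld_coords
    sld_coords_add sld_coords_scale sld_coords_local sld_coords_inj (enc Y)) as [x Hx].
  exists (dec x). intros i j Hi Hj.
  destruct (enc_entry (sld_map (dec x)) i j Hi Hj) as [E1 E2].
  destruct (enc_entry Y i j Hi Hj) as [E3 E4].
  pose proof (Hx (2 * (i * m + j))%nat ltac:(nia)) as X1.
  pose proof (Hx (2 * (i * m + j) + 1)%nat ltac:(nia)) as X2.
  unfold sld_coords in X1, X2. change (sld_map (dec x) i j = Y i j). apply Ceq; congruence.
Qed.
End SLDExistence.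

Definition matvec m (K : CMat) (v : nat -> Cx) : nat -> Cx :=
  fun k => Csum m (fun l => Cmul (K k l) (v l)).

Lemma B_mmul_r m A K u v : Bf m (mmul m A K) u v = Bf m A u (matvec m K v).
Proof.
  unfold Bf, mmul, matvec.
  setoid_rewrite Csum_mul_r. setoid_rewrite Csum_mul_l. setoid_rewrite Csum_mul_l.
  apply Csum_ext; intros i _. rewrite Csum_swap. apply Csum_ext; intros; apply Csum_ext; intros.
  rewrite !Cmul_assoc. reflexivity.
Qed.

Lemma B_mmul_l m A K u v : Herm m K -> Bf m (mmul m K A) u v = Bf m A (matvec m K u) v.
Proof.
  intros HK. unfold Bf, mmul, matvec.
  setoid_rewrite Csum_mul_r. setoid_rewrite Csum_mul_l. setoid_rewrite Cconj_Csum.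
  setoid_rewrite Csum_mul_r.
  rewrite (Csum_ext m (fun i => Csum m (fun j => Csum m (fun k => _))) (fun i => Csum m (fun k => Csum m (fun j =>
     Cmul (Cconj (u i)) (Cmul (Cmul (K i k) (A k j)) (v j)))))).
  2:{ intros i _. apply Csum_swap. }
  rewrite Csum_swap.
  apply Csum_ext; intros k Hk. rewrite Csum_swap. apply Csum_ext; intros i Hi. apply Csum_ext; intros j Hj.
  rewrite Cconj_mul, HK by auto. cring.
Qed.

Lemma B_expand m A v u a :
  Bf m A (fun i => Cadd (v i) (Cmul (a, 0) (u i))) (fun i => Cadd (v i) (Cmul (a, 0) (u i))) =
  Cadd (Cadd (Bf m A v v) (Cmul (a, 0) (Cadd (Bf m A v u) (Bf m A u v)))) (Cmul (a * a, 0) (Bf m A u u)).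
Proof.
  unfold Bf. rewrite Cmul_add_r, !Csum_mul_l, <- !Csum_plus.
  apply Csum_ext; intros i _. rewrite !Csum_mul_l, <- !Csum_plus.
  apply Csum_ext; intros j _. cring.
Qed.

Lemma B_madd m A A' u v : Bf m (madd A A') u v = Cadd (Bf m A u v) (Bf m A' u v).
Proof.
  unfold Bf. rewrite <- Csum_plus. apply Csum_ext; intros i _. rewrite <- Csum_plus.
  apply Csum_ext; intros j _. unfold madd. cring.
Qed.

Lemma B_mscale m c A u v : Bf m (mscale c A) u v = Cmul c (Bf m A u v).
Proof.
  unfold Bf. rewrite Csum_mul_l. apply Csum_ext; intros i _. rewrite Csum_mul_l.
  apply Csum_ext; intros j _. unfold mscale. cring.
Qed.

Lemma B_meq m A A' u v : meq m A A' -> Bf m A u v = Bf m A' u v.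
Proof. intros H. unfold Bf. apply Csum_ext; intros i Hi; apply Csum_ext; intros j Hj. rewrite H; auto. Qed.

(* The l^1 norm of complex numbers, used to show that I + a K is injective
   for small |a|. *)
Definition n1 (z : Cx) : R := Rabs (fst z) + Rabs (snd z).

Lemma n1_pos z : 0 <= n1 z.
Proof. unfold n1; pose proof (Rabs_pos (fst z)); pose proof (Rabs_pos (snd z)); lra. Qed.

Lemma n1_add a b : n1 (Cadd a b) <= n1 a + n1 b.
Proof. unfold n1, Cadd; simpl. pose proof (Rabs_triang (fst a) (fst b)); pose proof (Rabs_triang (snd a) (snd b)); lra. Qed.

Lemma n1_mul a b : n1 (Cmul a b) <= n1 a * n1 b.
Proof.
  unfold n1, Cmul; simpl.
  pose proof (Rabs_triang (fst a * fst b) (- (snd a * snd b))).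
  pose proof (Rabs_triang (fst a * snd b) (snd a * fst b)).
  rewrite Rabs_Ropp, !Rabs_mult in *. unfold Rminus.
  pose proof (Rabs_pos (fst a)); pose proof (Rabs_pos (snd a)); pose proof (Rabs_pos (fst b)); pose proof (Rabs_pos (snd b)).
  nra.
Qed.

Lemma n1_Csum m f : n1 (Csum m f) <= sumR m (fun i => n1 (f i)).
Proof.
  induction m. unfold Csum, sumR, n1; simpl. rewrite Rabs_R0. lra.
  rewrite Csum_S, sumR_S. eapply Rle_trans. apply n1_add. lra.
Qed.

Lemma n1_zero z : n1 z = 0 -> z = C0.
Proof.
  unfold n1. intros H. pose proof (Rabs_pos (fst z)); pose proof (Rabs_pos (snd z)).
  revert H. unfold Rabs. destruct Rcase_abs; destruct Rcase_abs; intros; apply Ceq; simpl; lra.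
Qed.

Lemma matvec_norm m K v :
  sumR m (fun i => n1 (matvec m K v i)) <=
  sumR m (fun i => sumR m (fun k => n1 (K i k))) * sumR m (fun k => n1 (v k)).
Proof.
  rewrite <- sumR_scal_r. apply sumR_le. intros i Hi. rewrite <- sumR_scal_r.
  unfold matvec. eapply Rle_trans; [apply n1_Csum|]. apply sumR_le. intros k Hk.
  eapply Rle_trans; [apply n1_mul|]. apply Rmult_le_compat_l; [apply n1_pos|].
  apply (sumR_term_le m (fun k => n1 (v k))); auto. intros; apply n1_pos.
Qed.

Lemma congr_nonzero m K v a :
  (exists i, (i < m)%nat /\ v i <> C0) ->
  Rabs a * sumR m (fun i => sumR m (fun k => n1 (K i k))) < 1 ->
  exists i, (i < m)%nat /\ Cadd (v i) (Cmul (a, 0) (matvec m K v i)) <> C0.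
Proof.
  intros [i0 [Hi0 Hv0]] Ha. apply NNPP. intros Hn.
  set (CK := sumR m (fun i => sumR m (fun k => n1 (K i k)))) in *.
  set (nv := sumR m (fun k => n1 (v k))).
  assert (Hv : forall i, (i < m)%nat -> n1 (v i) = Rabs a * n1 (matvec m K v i)).
  { intros i Hi. assert (E : Cadd (v i) (Cmul (a, 0) (matvec m K v i)) = C0)
      by (apply NNPP; intros Hne; apply Hn; eauto).
    assert (Ev : v i = Copp (Cmul (a, 0) (matvec m K v i))).
    { apply Ceq; unfold Cadd, Copp, C0 in *; simpl in *; injection E; intros; lra. }
    rewrite Ev. unfold n1, Copp, Cmul; simpl. rewrite !Rabs_Ropp.
    rewrite !Rmult_0_l, Rminus_0_r, Rplus_0_r, !Rabs_mult. ring. }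
  assert (Hpos : 0 < nv).
  { apply Rlt_le_trans with (n1 (v i0)).
    - destruct (Rle_lt_or_eq_dec 0 (n1 (v i0)) (n1_pos _)) as [Hp|Hp]; auto.
      exfalso. apply Hv0. apply n1_zero; auto.
    - apply (sumR_term_le m (fun i => n1 (v i)) i0); auto. intros; apply n1_pos. }
  assert (Hle : nv <= Rabs a * (CK * nv)).
  { unfold nv at 1. rewrite (sumR_ext m _ (fun i => Rabs a * n1 (matvec m K v i))) by auto.
    rewrite sumR_scal. apply Rmult_le_compat_l; [apply Rabs_pos | apply matvec_norm]. }
  assert (Rabs a * CK * nv < 1 * nv) by (apply Rmult_lt_compat_r; auto).
  lra.
Qed.

Lemma ctr_herm m K : Herm m K -> meq m (ctr K) K.
Proof. intros HK i j Hi Hj. unfold ctr. rewrite HK by auto. apply Cconj_conj. Qed.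

Lemma poly_deriv (a b c : R) : derivable_pt_lim (fun s => a + b * s + c * (s * s)) 0 b.
Proof.
  intros eps He. assert (Hp : 0 < eps / (Rabs c + 1)).
  { apply Rdiv_lt_0_compat; auto. pose proof (Rabs_pos c); lra. }
  exists (mkposreal _ Hp). intros h Hh Hlt. simpl in Hlt.
  replace ((a + b * (0 + h) + c * ((0 + h) * (0 + h)) - (a + b * 0 + c * (0 * 0))) / h - b) with (c * h)
    by (field; auto).
  rewrite Rabs_mult. pose proof (Rabs_pos c). pose proof (Rabs_pos h).
  apply Rle_lt_trans with ((Rabs c + 1) * Rabs h). nra.
  apply Rlt_le_trans with ((Rabs c + 1) * (eps / (Rabs c + 1))). apply Rmult_lt_compat_l; lra.
  right; field; lra.
Qed.

Lemma quot_deriv (a b c d : R) :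
  derivable_pt_lim (fun s => (a + b * s + c * (s * s)) / (1 + 0 * s + d * (s * s))) 0 b.
Proof.
  pose proof (derivable_pt_lim_div (fun s => a + b * s + c * (s * s)) (fun s => 1 + 0 * s + d * (s * s)) 0 b 0
    (poly_deriv a b c) (poly_deriv 1 0 d) ltac:(lra)) as H.
  cbv beta in H.
  replace ((b * (1 + 0 * 0 + d * (0 * 0)) - 0 * (a + b * 0 + c * (0 * 0))) / Rsqr (1 + 0 * 0 + d * (0 * 0)))
    with b in H by (unfold Rsqr; field).
  exact H.
Qed.

(* Every tangent vector Z is the velocity at 0 of a curve in \dot P_m:
   with K a Hermitian SLD of Z, take T(s) = rho + s Z + (s^2/4) K rho K,
   whose quadratic form is that of rho at v + (s/2) K v, normalized by its
   trace 1 + s^2 tau. *)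
Section Curve.
Variables (m : nat) (rho K Z : CMat).
Hypothesis Hr : Herm m rho.
Hypothesis Hpd : PosDef m rho.
Hypothesis Htr : mtr m rho = (1, 0).
Hypothesis HK : Herm m K.
Hypothesis HZ : IsSLD m rho Z K.
Hypothesis HZh : Herm m Z.
Hypothesis HZt : mtr m Z = C0.

Definition Wm : CMat := mscale (1/4, 0) (mmul m K (mmul m rho K)).
Definition Tm (s : R) : CMat := madd rho (madd (mscale (s, 0) Z) (mscale (s * s, 0) Wm)).
Definition tau : R := fst (mtr m Wm).
Definition gc (s : R) : CMat := mscale (/ (1 + s * s * tau), 0) (Tm s).

Lemma W_herm : Herm m Wm.
Proof. unfold Wm. apply herm_mscale; auto. apply herm_sandwich; auto. Qed.

Lemma tau_nonneg : 0 <= tau.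
Proof.
  unfold tau, Wm. rewrite mtr_mscale.
  rewrite (mtr_ext m _ (mmul m (ctr K) (mmul m rho K)))
    by (apply mmul_ext; [apply meq_sym, ctr_herm; auto | apply meq_refl]).
  rewrite tr_col. pose proof (sum_qf_nonneg m rho (fun j i => K i j) Hpd).
  unfold Cmul; simpl. lra.
Qed.

Lemma Tm_herm s : Herm m (Tm s).
Proof.
  unfold Tm. apply herm_madd; auto. apply herm_madd; apply herm_mscale; auto. apply W_herm.
Qed.

Lemma Tm_tr s : mtr m (Tm s) = (1 + s * s * tau, 0).
Proof.
  unfold Tm. rewrite !mtr_madd, !mtr_mscale, Htr, HZt.
  pose proof (herm_tr_real m Wm W_herm). unfold tau.
  apply Ceq; unfold Cadd, Cmul, C0; simpl; rewrite ?H; ring.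
Qed.

Lemma Tm_qf s v : qf m (Tm s) v =
  qf m rho (fun i => Cadd (v i) (Cmul (s / 2, 0) (matvec m K v i))).
Proof.
  unfold qf.
  rewrite B_expand. unfold Tm. rewrite !B_madd, !B_mscale.
  rewrite (B_meq m Z _ v v (meq_sym _ _ _ HZ)).
  rewrite B_mscale, B_madd, B_mmul_r, B_mmul_l by auto.
  unfold Wm. rewrite B_mscale, B_mmul_l, B_mmul_r by auto.
  apply Ceq; unfold Cadd, Cmul; simpl; field.
Qed.

Definition CKc : R := sumR m (fun i => sumR m (fun k => n1 (K i k))).
Definition eps0 : R := 1 / (CKc + 1).

Lemma CKc_nonneg : 0 <= CKc.
Proof. unfold CKc. apply sumR_nonneg; intros; apply sumR_nonneg; intros; apply n1_pos. Qed.

Lemma eps0_pos : 0 < eps0.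
Proof. unfold eps0. pose proof CKc_nonneg. apply Rdiv_lt_0_compat; lra. Qed.

Lemma Tm_pd s : Rabs s < eps0 -> PosDef m (Tm s).
Proof.
  intros Hs v Hv. change (0 < fst (qf m (Tm s) v)). rewrite Tm_qf. apply Hpd.
  apply congr_nonzero; auto. fold CKc. pose proof CKc_nonneg. pose proof (Rabs_pos s).
  replace (Rabs (s / 2)) with (Rabs s / 2)
    by (unfold Rdiv; rewrite Rabs_mult, Rabs_inv, (Rabs_right 2); lra).
  assert (Rabs s * (CKc + 1) < 1).
  { unfold eps0 in Hs. apply (Rmult_lt_compat_r (CKc + 1)) in Hs; [|lra].
    replace (1 / (CKc + 1) * (CKc + 1)) with 1 in Hs by (field; lra). lra. }
  nra.
Qed.

Lemma gc_pdot s : Rabs s < eps0 -> Pdot m (gc s).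
Proof.
  intros Hs. pose proof tau_nonneg.
  assert (Hd : 0 < 1 + s * s * tau) by nra.
  split; [|split].
  - unfold gc. apply herm_mscale; auto. apply Tm_herm.
  - intros v Hv. change (0 < fst (qf m (gc s) v)).
    pose proof (Tm_pd s Hs v Hv) as Hq. change (0 < fst (qf m (Tm s) v)) in Hq.
    unfold gc, qf in *. rewrite B_mscale. unfold Cmul; simpl.
    assert (0 < / (1 + s * s * tau)) by (apply Rinv_0_lt_compat; auto). nra.
  - unfold gc. rewrite mtr_mscale, Tm_tr. apply Ceq; unfold Cmul; simpl; field; lra.
Qed.

Lemma gc_curve : CurveThrough m rho Z gc.
Proof.
  split; [|split].
  - exists eps0. split. apply eps0_pos. intros; apply gc_pdot; auto.
  - intros i j Hi Hj. unfold gc, Tm, mscale, madd. apply Ceq; unfold Cmul, Cadd; simpl; field.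
  - intros i j Hi Hj. split.
    + eapply derivable_pt_lim_ext; [|apply (quot_deriv (fst (rho i j)) (fst (Z i j)) (fst (Wm i j)) tau)].
      intros s. unfold gc, Tm, mscale, madd, Cmul, Cadd; simpl.
      replace (1 + 0 * s + tau * (s * s)) with (1 + s * s * tau) by ring. unfold Rdiv. ring.
    + eapply derivable_pt_lim_ext; [|apply (quot_deriv (snd (rho i j)) (snd (Z i j)) (snd (Wm i j)) tau)].
      intros s. unfold gc, Tm, mscale, madd, Cmul, Cadd; simpl.
      replace (1 + 0 * s + tau * (s * s)) with (1 + s * s * tau) by ring. unfold Rdiv. ring.
Qed.
End Curve.



Lemma sld_unique m rho Z L1 L2 : PosDef m rho ->
  IsSLD m rho Z L1 -> IsSLD m rho Z L2 -> meq m L1 L2.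
Proof.
  intros Hp H1 H2.
  set (D := madd L1 (mscale (-1, 0) L2)).
  assert (HD : meq m D zeroM).
  { apply (sld_inj m rho D Hp). intros i j Hi Hj.
    pose proof (H1 i j Hi Hj) as E. rewrite <- (H2 i j Hi Hj) in E.
    unfold D, madd at 1. rewrite mmul_madd_r, mmul_madd_l, mmul_mscale_r, mmul_mscale_l.
    unfold mscale, madd in E.
    apply Ceq; [apply (f_equal fst) in E | apply (f_equal snd) in E]; cunfold; lra. }
  intros i j Hi Hj. pose proof (HD i j Hi Hj) as E. unfold D, zeroM in E.
  apply Ceq; [apply (f_equal fst) in E | apply (f_equal snd) in E]; cunfold; lra.
Qed.

Lemma sld_ctr m rho Z L : Herm m rho -> Herm m Z -> IsSLD m rho Z L -> IsSLD m rho Z (ctr L).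
Proof.
  intros Hr HZ HL i j Hi Hj.
  assert (E1 : mmul m rho (ctr L) i j = Cconj (mmul m L rho j i)).
  { unfold mmul, ctr. rewrite Cconj_Csum. apply Csum_ext; intros k Hk.
    rewrite Cconj_mul, <- (Hr k i) by auto. apply Cmul_comm. }
  assert (E2 : mmul m (ctr L) rho i j = Cconj (mmul m rho L j i)).
  { unfold mmul, ctr. rewrite Cconj_Csum. apply Csum_ext; intros k Hk.
    rewrite Cconj_mul, <- (Hr j k) by auto. apply Cmul_comm. }
  unfold mscale, madd. rewrite E1, E2, (HZ j i Hj Hi), <- (HL j i Hj Hi). cring.
Qed.

Lemma sld_herm m rho Z L : Herm m rho -> PosDef m rho -> Herm m Z ->
  IsSLD m rho Z L -> Herm m L.
Proof.
  intros Hr Hp HZ HL i j Hi Hj.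
  rewrite <- (sld_unique m rho Z _ _ Hp (sld_ctr m rho Z L Hr HZ HL) HL j i Hj Hi). reflexivity.
Qed.

Lemma tr_sld_self m rho Z K : IsSLD m rho Z K ->
  mtr m (mmul m Z K) = mtr m (mmul m K (mmul m rho K)).
Proof.
  intros HZ. rewrite (mtr_ext m _ (mmul m (mscale (1/2, 0) (madd (mmul m rho K) (mmul m K rho))) K)).
  - rewrite mtr_mmul_mscale_l, mtr_mmul_madd_l, (mtr_comm m (mmul m rho K) K), mtr_assoc.
    apply Ceq; unfold Cmul, Cadd; simpl; lra.
  - apply mmul_ext; [apply meq_sym; auto | apply meq_refl].
Qed.

(* A tangent Z whose Hermitian SLD K satisfies Re tr(Z K) = 0 vanishes:
   tr(K rho K) = 0 forces K = 0 by positivity, hence Z = 0. *)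
Lemma sld_orth_zero m rho Z K : PosDef m rho -> Herm m K -> IsSLD m rho Z K ->
  fst (mtr m (mmul m Z K)) = 0 -> meq m Z zeroM.
Proof.
  intros Hp HK HZ T0.
  rewrite (tr_sld_self m rho Z K HZ), (mtr_ext m _ (mmul m (ctr K) (mmul m rho K))), tr_col in T0
    by (apply mmul_ext; [apply meq_sym, ctr_herm; auto | apply meq_refl]).
  assert (K0 : forall i j, (i < m)%nat -> (j < m)%nat -> K i j = C0)
    by (intros i j Hi Hj; apply (sum_qf_zero m rho (fun j i => K i j) Hp T0 j i Hj Hi)).
  intros i j Hi Hj. rewrite <- (HZ i j Hi Hj). unfold mscale, madd, mmul, zeroM.
  rewrite !Csum_zero; [cring | |]; intros k Hk; rewrite K0 by auto; cring.
Qed.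

Lemma grad_unique m F rho G1 G2 :
  Pdot m rho -> IsGrad m F rho G1 -> IsGrad m F rho G2 -> meq m G1 G2.
Proof.
  intros [Hr [Hpd Htr]] [[H1h H1t] H1] [[H2h H2t] H2].
  set (Z := madd G1 (mscale (-1, 0) G2)).
  assert (HZh : Herm m Z) by (apply herm_madd; auto; apply herm_mscale; simpl; auto).
  assert (HZt : mtr m Z = C0) by (unfold Z; rewrite mtr_madd, mtr_mscale, H1t, H2t; cring).
  destruct (sld_exists m rho Hpd Z) as [K HK].
  pose proof (sld_herm m rho Z K Hr Hpd HZh HK) as HKh.
  destruct (sld_exists m rho Hpd G1) as [L1 HL1].
  destruct (sld_exists m rho Hpd G2) as [L2 HL2].
  pose proof (gc_curve m rho K Z Hr Hpd Htr HKh HK HZh HZt) as Hc.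
  pose proof (uniqueness_limite _ _ _ _ (H1 Z (conj HZh HZt) L1 K HL1 HK _ Hc)
                                        (H2 Z (conj HZh HZt) L2 K HL2 HK _ Hc)) as EQ.
  rewrite (QF_trace _ _ _ _ _ HL1), (QF_trace _ _ _ _ _ HL2) in EQ.
  assert (HZ0 : meq m Z zeroM).
  { apply (sld_orth_zero m rho Z K Hpd HKh HK).
    unfold Z. rewrite mtr_mmul_madd_l, mtr_mmul_mscale_l. unfold Cadd, Cmul; simpl. rewrite EQ. ring. }
  intros i j Hi Hj. pose proof (HZ0 i j Hi Hj) as E. unfold Z, madd, mscale, zeroM in E.
  apply Ceq; [apply (f_equal fst) in E | apply (f_equal snd) in E]; cunfold; lra.
Qed.

Lemma IsGrad_meq m F rho G G' : meq m G G' -> IsGrad m F rho G -> IsGrad m F rho G'.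
Proof.
  intros E [[Hh Ht] Hd]. split.
  - split; [|rewrite <- (mtr_ext m G G' E); auto].
    intros i j Hi Hj. rewrite <- !E by auto. apply Hh; auto.
  - intros X HX L L' HL HL' g Hg. apply (Hd X HX L L'); auto.
    eapply meq_trans; [exact HL | apply meq_sym; auto].
Qed.

Lemma odeRHS_gradFormula m rho M i j :
  Cmul (-1, 0) (odeRHS m rho M i j) = gradFormula m rho M i j.
Proof. unfold odeRHS, gradFormula, madd, mscale, Copp. cring. Qed.

Lemma gradient_flow_iff_ode m F (a b : R) (r dr Mr : R -> CMat) :
  (forall rho M, Pdot m rho -> IsMF m F rho M -> IsGrad m F rho (gradFormula m rho M)) ->
  (forall t, a < t < b -> Pdot m (r t)) ->
  (forall t, a < t < b -> IsMF m F (r t) (Mr t)) ->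
  ((forall t, a < t < b -> IsGrad m F (r t) (mscale (-1, 0) (dr t))) <->
   (forall t, a < t < b -> meq m (dr t) (odeRHS m (r t) (Mr t)))).
Proof.
  intros Hgrad Hp HM. split.
  - intros HG t Ht i j Hi Hj.
    pose proof (grad_unique m F (r t) _ _ (Hp t Ht) (HG t Ht) (Hgrad _ _ (Hp t Ht) (HM t Ht)) i j Hi Hj)
      as E.
    rewrite <- odeRHS_gradFormula in E. unfold mscale in E.
    apply Ceq; [apply (f_equal fst) in E | apply (f_equal snd) in E]; cunfold; lra.
  - intros HE t Ht. apply (IsGrad_meq m F (r t) (gradFormula m (r t) (Mr t))).
    + intros i j Hi Hj. rewrite <- odeRHS_gradFormula. unfold mscale. rewrite HE by auto. reflexivity.
    + apply Hgrad; auto.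
Qed.

Theorem lemma2p2 (m : nat) (U : CMat -> Prop) (F : CMat -> R)
  (HU : OpenHerm m U) (HPU : forall p, Pdot m p -> U p)
  (HFext : forall A B, meq m A B -> F A = F B)
  (HF : SmoothOn m U F) :
  (forall rho M, Pdot m rho -> IsMF m F rho M ->
     IsGrad m F rho (gradFormula m rho M)) /\
  (forall (a b : R) (r dr Mr : R -> CMat),
     (forall t, a < t < b -> Pdot m (r t)) ->
     (forall t, a < t < b -> IsMF m F (r t) (Mr t)) ->
     (forall t i j, a < t < b -> (i < m)%nat -> (j < m)%nat ->
        derivable_pt_lim (fun s => fst (r s i j)) t (fst (dr t i j)) /\
        derivable_pt_lim (fun s => snd (r s i j)) t (snd (dr t i j))) ->
     ((forall t, a < t < b -> IsGrad m F (r t) (mscale (-1, 0) (dr t))) <->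
      (forall t, a < t < b -> meq m (dr t) (odeRHS m (r t) (Mr t))))).
Proof.
  assert (Hgrad : forall rho M, Pdot m rho -> IsMF m F rho M ->
                    IsGrad m F rho (gradFormula m rho M))
    by (intros; apply (gradFormula_is_grad m U F); auto).
  split; [exact Hgrad|].
  intros a b r dr Mr Hp HM _. apply gradient_flow_iff_ode; auto.
Qed.
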